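(* (i) If two links are related by an odd number of $\pm(2,2)$-moves, then they are not $5$-move equivalent. (ii) $F_L(1,2\cos(2\pi/5))$ is an invariant of $5$-move equivalence of links.
   Context: A $\pm(2,2)$-move is a rational $\pm\frac52$-move: a sub-tangle of the link consisting of two parallel arcs (Conway's tangle $[0]$, in a ball meeting the link in two arcs) is replaced by the rational tangle $[\frac52]$ or $[-\frac52]$ (the tangle obtained from two half-twists followed by two half-twists in the perpendicular direction, or its mirror image). A $5$-move replaces $[0]$ by five half-twists $[5]$; $5$-move equivalence is generated by isotopy and $5$-moves and their inverses. $F_L(1,x)=Q_L(x)$ is the Brandt–Lickorish–Millett–Ho polynomial of unoriented links: $Q_{\text{unknot}}=1$ and $Q_{L_+}+Q_{L_-}=x(Q_{L_0}+Q_{L_\infty})$ for unoriented diagrams differing in a disk by a crossing, the opposite crossing, and its two smoothings. *)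

(* Unoriented link diagrams are encoded as Morse (plat) words
   in the unoriented tangle category: a diagram is a list of elementary
   slices read bottom to top; each slice is a cup, cap, or crossing acting
   at a given strand position.  Link isotopy is the equivalence generated by
   Turaev's local relations (planar interchange, zig-zag, Reidemeister I, II,
   III, and crossing/cup-cap slides), applied anywhere in a diagram. *)
From Stdlib Require Import Reals List Arith Relations.
Import ListNotations.
Open Scope R_scope.

Inductive elem : Type := Cup | Cap | Xp | Xn.
(* Xp at k : the strand from bottom position k to top position k+1 passes
   over the strand from bottom k+1 to top k;  Xn at k : it passes under. *)

Record slice : Type := Sl { pos : nat; el : elem }.
Definition diagram : Type := list slice.

Definition ins (e : elem) : nat := match e with Cup => 0 | _ => 2 end.
Definition outs (e : elem) : nat := match e with Cap => 0 | _ => 2 end.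

Fixpoint tangle (w : nat) (d : diagram) (w' : nat) : Prop :=
  match d with
  | [] => w' = w
  | s :: d' => (pos s + ins (el s) <= w)%nat /\
               tangle (w - ins (el s) + outs (el s))%nat d' w'
  end.

Definition link (d : diagram) : Prop := tangle 0 d 0.

Definition shift (k : nat) (d : diagram) : diagram :=
  map (fun s => Sl (k + pos s) (el s)) d.

(* Elementary local isotopy relations (Turaev's moves, unframed). *)
Inductive basic : diagram -> diagram -> Prop :=
  | b_comm : forall a i b j, (i + outs a <= j)%nat ->
      basic [Sl i a; Sl j b] [Sl (j + ins a - outs a) b; Sl i a]
  | b_zig1 : forall k, basic [Sl (S k) Cup; Sl k Cap] []
  | b_zig2 : forall k, basic [Sl k Cup; Sl (S k) Cap] []
  | b_r2a : forall k, basic [Sl k Xp; Sl k Xn] []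
  | b_r2b : forall k, basic [Sl k Xn; Sl k Xp] []
  | b_r3 : forall k, basic [Sl k Xp; Sl (S k) Xp; Sl k Xp]
                           [Sl (S k) Xp; Sl k Xp; Sl (S k) Xp]
  | b_r1cp : forall k, basic [Sl k Cup; Sl k Xp] [Sl k Cup]
  | b_r1cn : forall k, basic [Sl k Cup; Sl k Xn] [Sl k Cup]
  | b_r1ap : forall k, basic [Sl k Xp; Sl k Cap] [Sl k Cap]
  | b_r1an : forall k, basic [Sl k Xn; Sl k Cap] [Sl k Cap]
  | b_scp : forall k, basic [Sl k Cup; Sl (S k) Xp] [Sl (S k) Cup; Sl k Xn]
  | b_scn : forall k, basic [Sl k Cup; Sl (S k) Xn] [Sl (S k) Cup; Sl k Xp]
  | b_sap : forall k, basic [Sl k Xp; Sl (S k) Cap] [Sl (S k) Xn; Sl k Cap]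
  | b_san : forall k, basic [Sl k Xn; Sl (S k) Cap] [Sl (S k) Xp; Sl k Cap].

Definition iso_step (D1 D2 : diagram) : Prop :=
  exists p u v s w w', tangle 0 p w /\ tangle w u w' /\ tangle w v w' /\
    tangle w' s 0 /\ basic u v /\ D1 = p ++ u ++ s /\ D2 = p ++ v ++ s.

Definition iso : diagram -> diagram -> Prop := clos_refl_sym_trans _ iso_step.

(* Local move: two parallel arcs (the tangle [0], i.e. two parallel vertical
   strands at positions k, k+1 of a diagram) are replaced by the 2->2
   tangle T. *)
Definition local_move (T : diagram) (D1 D2 : diagram) : Prop :=
  exists p s w k, tangle 0 p w /\ (k + 2 <= w)%nat /\ tangle w s 0 /\
    D1 = p ++ s /\ D2 = p ++ shift k T ++ s.

(* The ball is drawn so that [0] is the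
   identity (two vertical strands); a horizontal twist (adding [1]) is then
   a crossing stacked on top, a vertical twist (T*[1]) adds a crossing [1]
   to the right of T.  c is the crossing type of [1] (Xp or its mirror Xn). *)
Definition htw (c : elem) (T : diagram) : diagram := T ++ [Sl 0 c].
Definition vtw (c : elem) (T : diagram) : diagram :=
  [Sl 1 Cup] ++ T ++ [Sl 2 c; Sl 1 Cap].
Definition tinf : diagram := [Sl 0 Cap; Sl 0 Cup].

(* [5/2] = [2 2] = (([oo]*[1])*[1]) + [1] + [1]; the mirror gives [-5/2] *)
Definition T52 (c : elem) : diagram := htw c (htw c (vtw c (vtw c tinf))).
Definition T5 (c : elem) : diagram := repeat (Sl 0 c) 5.

Definition step5 (D1 D2 : diagram) : Prop :=
  iso_step D1 D2 \/ local_move (T5 Xp) D1 D2 \/ local_move (T5 Xn) D1 D2.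
Definition equiv5 : diagram -> diagram -> Prop := clos_refl_sym_trans _ step5.

Definition one22 (D1 D2 : diagram) : Prop :=
  exists E1 E2, iso D1 E1 /\ iso E2 D2 /\
    (local_move (T52 Xp) E1 E2 \/ local_move (T52 Xn) E1 E2 \/
     local_move (T52 Xp) E2 E1 \/ local_move (T52 Xn) E2 E1).

Inductive chain22 : nat -> diagram -> diagram -> Prop :=
  | ch0 : forall D E, iso D E -> chain22 0 D E
  | chS : forall n D E F, one22 D E -> chain22 n E F -> chain22 (S n) D F.

Definition unknot : diagram := [Sl 0 Cup; Sl 0 Cap].

(* Q is the BLMH polynomial evaluated at x: an isotopy invariant of
   unoriented links, normalized on the unknot, satisfying
   Q(L+) + Q(L-) = x (Q(L0) + Q(Loo)). *)
Definition is_Q_at (x : R) (Q : diagram -> R) : Prop :=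
  (forall D E, link D -> iso D E -> Q D = Q E) /\
  Q unknot = 1 /\
  (forall p s w k, tangle 0 p w -> (k + 2 <= w)%nat -> tangle w s 0 ->
     Q (p ++ Sl k Xp :: s) + Q (p ++ Sl k Xn :: s) =
     x * (Q (p ++ s) + Q (p ++ Sl k Cap :: Sl k Cup :: s))).

From Stdlib Require Import Reals Lra ZArith Lia List Bool FunctionalExtensionality Classical Relations.
Import ListNotations.
Open Scope nat_scope.

(* For a link L let G(L) be the Gauss sum, over the Z/5-colourings of the shaded regions
   of a checkerboard colouring, of zeta^(Goeritz form), zeta a primitive fifth root of
   unity; it is computed in Z[zeta] by a state sum along the Morse word of the diagram.
   Every isotopy move and every 5-move multiplies G by a power of sqrt 5, while a
   (2,2)-move multiplies it by minus such a power; both facts are local and are checked by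
   evaluating the moves on formal sums of states.  As a Gauss sum, G(L) has a positive
   integer norm G(L) conj(G(L)), so G(L) <> 0; since a sum of two powers of sqrt 5 never
   vanishes, 5-moves cannot realise the sign change caused by an odd number of
   (2,2)-moves.  For (ii), x = 2 cos(2 pi/5) satisfies x^2 + x - 1 = 0, and the skein
   relation turns the values of Q on k half-twists into a linear recurrence of period 5. *)

(** * The ring Z[zeta_5] *)

(* Coordinates in the basis 1, zeta, zeta^2, zeta^3, reduced by zeta^4 = -1 - zeta - zeta^2 - zeta^3. *)
Record K := mkK { k0 : Z; k1 : Z; k2 : Z; k3 : Z }.
Definition K0 := mkK 0 0 0 0.
Definition K1 := mkK 1 0 0 0.
Definition Knat (m : nat) : K := mkK (Z.of_nat m) 0 0 0.
Definition Kadd x y := mkK (k0 x + k0 y) (k1 x + k1 y) (k2 x + k2 y) (k3 x + k3 y).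
Definition Kopp x := mkK (- k0 x) (- k1 x) (- k2 x) (- k3 x).
Definition Ksub x y := Kadd x (Kopp y).
Definition Kmul x y :=
  let c4 := (k1 x * k3 y + k2 x * k2 y + k3 x * k1 y)%Z in
  let c5 := (k2 x * k3 y + k3 x * k2 y)%Z in
  let c6 := (k3 x * k3 y)%Z in
  mkK (k0 x * k0 y - c4 + c5)
      (k0 x * k1 y + k1 x * k0 y - c4 + c6)
      (k0 x * k2 y + k1 x * k1 y + k2 x * k0 y - c4)
      (k0 x * k3 y + k1 x * k2 y + k2 x * k1 y + k3 x * k0 y - c4).

Lemma Kring : ring_theory K0 K1 Kadd Kmul Ksub Kopp (@eq K).
Proof.
  constructor; intros; repeat match goal with x : K |- _ => destruct x end;
  unfold Kadd, Kmul, Ksub, Kopp, K0, K1; cbn [k0 k1 k2 k3]; try reflexivity; f_equal; ring.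
Qed.
Add Ring Kr : Kring.

Definition zeta := mkK 0 1 0 0.
Fixpoint Kpow (x : K) (n : nat) : K := match n with O => K1 | S n => Kmul x (Kpow x n) end.
Definition zpow (z : Z) : K := Kpow zeta (Z.to_nat (z mod 5)).

(* The quadratic Gauss sum of Z/5; it squares to 5. *)
Definition sqrt5 : K := Kadd (Kadd zeta (Kopp (Kpow zeta 2))) (Kadd (Kopp (Kpow zeta 3)) (Kpow zeta 4)).

Lemma Kpow_add x a b : Kpow x (a + b) = Kmul (Kpow x a) (Kpow x b).
Proof. induction a as [|a IH]; simpl. ring. rewrite IH. ring. Qed.

Lemma mod5_cases a : (a mod 5 = 0 \/ a mod 5 = 1 \/ a mod 5 = 2 \/ a mod 5 = 3 \/ a mod 5 = 4)%Z.
Proof. pose proof (Z.mod_pos_bound a 5). lia. Qed.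

Lemma zpow_mod a : zpow a = zpow (a mod 5).
Proof. unfold zpow. rewrite Z.mod_mod by lia. reflexivity. Qed.

Lemma zpow_add a b : Kmul (zpow a) (zpow b) = zpow (a + b).
Proof.
  rewrite (zpow_mod a), (zpow_mod b), (zpow_mod (a + b)), Z.add_mod by lia.
  destruct (mod5_cases a) as [-> | [-> | [-> | [-> | ->]]]];
  destruct (mod5_cases b) as [-> | [-> | [-> | [-> | ->]]]]; vm_compute; reflexivity.
Qed.

Lemma zpow_add_mul5 a k : zpow (a + 5 * k) = zpow a.
Proof.
  rewrite (zpow_mod (a + 5 * k)), (zpow_mod a). f_equal.
  rewrite Z.mul_comm. apply Z_mod_plus_full.
Qed.

(* [Kconj] is the Galois automorphism zeta |-> zeta^-1, i.e. complex conjugation. *)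
Definition Kconj (x : K) : K :=
  mkK (k0 x - k1 x) (- k1 x) (k3 x - k1 x) (k2 x - k1 x).

Lemma Kconj_add x y : Kconj (Kadd x y) = Kadd (Kconj x) (Kconj y).
Proof. destruct x, y; unfold Kconj, Kadd; cbn [k0 k1 k2 k3]; f_equal; ring. Qed.

Lemma Kconj_mul x y : Kconj (Kmul x y) = Kmul (Kconj x) (Kconj y).
Proof. destruct x, y; unfold Kconj, Kmul; cbn [k0 k1 k2 k3]; f_equal; ring. Qed.

Lemma Kconj_zpow a : Kconj (zpow a) = zpow (- a).
Proof.
  assert (Hl : Kmul (Kconj (zpow a)) (zpow a) = K1).
  { rewrite (zpow_mod a). destruct (mod5_cases a) as [-> | [-> | [-> | [-> | ->]]]];
    vm_compute; reflexivity. }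
  assert (Hr : Kmul (zpow a) (zpow (- a)) = K1).
  { rewrite zpow_add, Z.add_opp_diag_r. reflexivity. }
  transitivity (Kmul (Kconj (zpow a)) (Kmul (zpow a) (zpow (- a)))); [rewrite Hr; ring|].
  transitivity (Kmul (Kmul (Kconj (zpow a)) (zpow a)) (zpow (- a))); [ring|].
  rewrite Hl. ring.
Qed.

(* 1 - zeta^c divides 5 = prod_(j=1..4) (1 - zeta^j) when 5 does not divide c,
   and Z[zeta] has no 5-torsion. *)
Lemma zpow_fixed_zero x c : (c mod 5 <> 0)%Z -> x = Kmul (zpow c) x -> x = K0.
Proof.
  intros Hc E. rewrite zpow_mod in E.
  set (u := zpow (c mod 5)) in E.
  assert (Hx : Kmul (Ksub K1 u) x = K0).
  { transitivity (Ksub x (Kmul u x)); [unfold Ksub; ring|]. rewrite <- E. unfold Ksub. ring. }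
  assert (Hdiv : exists v, Kmul v (Ksub K1 u) = Knat 5).
  { pose (om j := Ksub K1 (Kpow zeta j)).
    unfold u. destruct (mod5_cases c) as [E' | [E' | [E' | [E' | E']]]]; rewrite E'; [lia| | | |].
    - exists (Kmul (om 2) (Kmul (om 3) (om 4))). vm_compute. reflexivity.
    - exists (Kmul (om 1) (Kmul (om 3) (om 4))). vm_compute. reflexivity.
    - exists (Kmul (om 1) (Kmul (om 2) (om 4))). vm_compute. reflexivity.
    - exists (Kmul (om 1) (Kmul (om 2) (om 3))). vm_compute. reflexivity. }
  destruct Hdiv as [v Hv].
  assert (H5 : Kmul (Knat 5) x = K0).
  { rewrite <- Hv. transitivity (Kmul v (Kmul (Ksub K1 u) x)); [ring|]. rewrite Hx. ring. }
  destruct x as [a0 a1 a2 a3].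
  pose proof (f_equal k0 H5) as E0; pose proof (f_equal k1 H5) as E1;
  pose proof (f_equal k2 H5) as E2; pose proof (f_equal k3 H5) as E3.
  cbn [Knat Kmul K0 k0 k1 k2 k3] in E0, E1, E2, E3. unfold K0. f_equal; lia.
Qed.

(** * The Goeritz state sum of a diagram *)

Fixpoint ins_at (j x : nat) (s : list nat) : list nat :=
  match j, s with
  | O, _ => x :: s
  | S j, y :: s => y :: ins_at j x s
  | S j, [] => [x]
  end.
Fixpoint rem_at (j : nat) (s : list nat) : list nat :=
  match j, s with
  | O, _ :: s => s
  | S j, y :: s => y :: rem_at j s
  | _, [] => []
  end.
Fixpoint set_at (j x : nat) (s : list nat) : list nat :=
  match j, s with
  | O, _ :: s => x :: s
  | S j, y :: s => y :: set_at j x s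
  | _, [] => []
  end.

Record KModule := { Vt : Type; vadd : Vt -> Vt -> Vt; vzero : Vt; vscale : K -> Vt -> Vt }.

Definition sum5 (M : KModule) (f : nat -> Vt M) : Vt M :=
  fold_right (fun z acc => vadd M (f z) acc) (vzero M) [0; 1; 2; 3; 4].

Definition cross_sign (e : elem) (odd : bool) : Z :=
  match e, odd with
  | Xp, true | Xn, false => 1
  | Xp, false | Xn, true => -1
  | _, _ => 0
  end.
Definition cross_weight (e : elem) (odd : bool) (a c : nat) : K :=
  zpow (cross_sign e odd * (Z.of_nat a - Z.of_nat c) * (Z.of_nat a - Z.of_nat c)).

(* A state lists colours in Z/5 of the shaded regions of the checkerboard colouring at
   the current level; at width 2h there are h of them, region j lying between strands 2j
   and 2j+1.  A slice at position 2j acts inside region j, one at 2j+1 between regions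
   j and j+1.  [step_at M j odd e F s] is the value at the state [s] below the slice of
   the slice followed by a tangle whose value on states is [F]. *)
Definition step_at (M : KModule) (j : nat) (odd : bool) (e : elem)
  (F : list nat -> Vt M) (s : list nat) : Vt M :=
  match e, odd with
  | Cup, false => sum5 M (fun z => F (ins_at j z s))
  | Cup, true => F (ins_at (S j) (nth j s 0) s)
  | Cap, false => F (rem_at j s)
  | Cap, true => if Nat.eqb (nth j s 0) (nth (S j) s 0) then F (rem_at (S j) s) else vzero M
  | _, false => sum5 M (fun z => vscale M (cross_weight e false (nth j s 0) z) (F (set_at j z s)))
  | _, true => vscale M (cross_weight e true (nth j s 0) (nth (S j) s 0)) (F s)
  end.
Definition step (M : KModule) (sl : slice) : (list nat -> Vt M) -> list nat -> Vt M :=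
  step_at M (Nat.div2 (pos sl)) (Nat.odd (pos sl)) (el sl).
Definition eval_diag (M : KModule) (d : diagram) (F : list nat -> Vt M) : list nat -> Vt M :=
  fold_right (step M) F d.

Definition Kvals : KModule := {| Vt := K; vadd := Kadd; vzero := K0; vscale := Kmul |}.

Definition goeritz (D : diagram) : K := eval_diag Kvals D (fun _ => K1) [].

Lemma eval_diag_app (M : KModule) d1 d2 F s :
  eval_diag M (d1 ++ d2) F s = eval_diag M d1 (eval_diag M d2 F) s.
Proof. unfold eval_diag. rewrite fold_right_app. reflexivity. Qed.

Lemma step_ext (M : KModule) sl (F F' : list nat -> Vt M) s :
  (forall t, F t = F' t) -> step M sl F s = step M sl F' s.
Proof.
  intro E. unfold step, step_at, sum5.
  destruct (el sl), (Nat.odd (pos sl)); simpl; rewrite ?E; reflexivity.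
Qed.

Lemma eval_diag_ext (M : KModule) d (F F' : list nat -> Vt M) s :
  (forall t, F t = F' t) -> eval_diag M d F s = eval_diag M d F' s.
Proof.
  intro E. revert s; induction d as [|sl d IH]; intro s; simpl; [apply E|].
  apply step_ext. exact IH.
Qed.

Lemma eval_diag_scale d F c s :
  eval_diag Kvals d (fun t => Kmul c (F t)) s = Kmul c (eval_diag Kvals d F s).
Proof.
  revert s; induction d as [|sl d IH]; intro s; simpl; [reflexivity|].
  rewrite (step_ext Kvals sl _ (fun t => Kmul c (eval_diag Kvals d F t))) by exact IH.
  unfold step, step_at, sum5.
  destruct (el sl), (Nat.odd (pos sl)); cbn [fold_right vadd vscale vzero Kvals]; try ring.
  destruct (Nat.eqb _ _); simpl; ring.
Qed.

(** * Formal sums of states *)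

(* Evaluating a diagram on formal sums of top states instead of values lets a local
   relation be checked by comparing finite normal forms. *)
Definition formal := list (K * list nat).
Definition fscale (c : K) (L : formal) : formal := map (fun p => (Kmul c (fst p), snd p)) L.
Definition formal_sums : KModule := {| Vt := formal; vadd := @app _; vzero := []; vscale := fscale |}.
Definition fbase (t : list nat) : formal := [(K1, t)].

Definition feval (L : formal) (H : list nat -> K) : K :=
  fold_right (fun p acc => Kadd (Kmul (fst p) (H (snd p))) acc) K0 L.

Lemma feval_app L1 L2 H : feval (L1 ++ L2) H = Kadd (feval L1 H) (feval L2 H).
Proof. induction L1 as [|[c t] L IH]; simpl; [ring|]. rewrite IH. ring. Qed.

Lemma feval_fscale c L H : feval (fscale c L) H = Kmul c (feval L H).
Proof. induction L as [|[c' t] L IH]; simpl; [ring|]. rewrite IH. ring. Qed.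

Lemma feval_ext L A B : (forall t, A t = B t) -> feval L A = feval L B.
Proof. intro E. induction L as [|[c t] L IH]; simpl; auto. rewrite E, IH. reflexivity. Qed.

Lemma feval_zero L : feval L (fun _ => K0) = K0.
Proof. induction L as [|[c t] L IH]; simpl; [ring|]. rewrite IH. ring. Qed.

Lemma feval_add L A B : feval L (fun t => Kadd (A t) (B t)) = Kadd (feval L A) (feval L B).
Proof. induction L as [|[c t] L IH]; simpl; [ring|]. rewrite IH. ring. Qed.

Lemma feval_scale L c A : feval L (fun t => Kmul c (A t)) = Kmul c (feval L A).
Proof. induction L as [|[c' t] L IH]; simpl; [ring|]. rewrite IH. ring. Qed.

Lemma feval_comm L1 L2 (X : list nat -> list nat -> K) :
  feval L1 (fun t1 => feval L2 (X t1)) = feval L2 (fun t2 => feval L1 (fun t1 => X t1 t2)).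
Proof.
  induction L1 as [|[c t] L IH]; simpl.
  - symmetry. apply feval_zero.
  - rewrite IH, feval_add, feval_scale. reflexivity.
Qed.

Lemma step_feval sl (Phi : list nat -> formal) H s :
  step Kvals sl (fun t => feval (Phi t) H) s = feval (step formal_sums sl Phi s) H.
Proof.
  unfold step, step_at, sum5. destruct (el sl), (Nat.odd (pos sl)); simpl;
  rewrite ?feval_app, ?feval_fscale; simpl; try reflexivity.
  destruct (Nat.eqb _ _); reflexivity.
Qed.

Lemma eval_diag_formal d (H : list nat -> K) s : eval_diag Kvals d H s = feval (eval_diag formal_sums d fbase s) H.
Proof.
  transitivity (eval_diag Kvals d (fun t => feval (fbase t) H) s).
  { apply eval_diag_ext. intro t. simpl. ring. }
  revert s. induction d as [|sl d IH]; intro s; [reflexivity|].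
  change (step Kvals sl (eval_diag Kvals d (fun t => feval (fbase t) H)) s
          = feval (step formal_sums sl (eval_diag formal_sums d fbase) s) H).
  rewrite <- step_feval. apply step_ext. exact IH.
Qed.

Lemma step_comm s1 s2 m1 m2 (X : list nat -> list nat -> K) :
  step Kvals s1 (fun t1 => step Kvals s2 (X t1) m2) m1 =
  step Kvals s2 (fun t2 => step Kvals s1 (fun t1 => X t1 t2) m1) m2.
Proof.
  change (eval_diag Kvals [s1] (fun t1 => eval_diag Kvals [s2] (X t1) m2) m1 =
          eval_diag Kvals [s2] (fun t2 => eval_diag Kvals [s1] (fun t1 => X t1 t2) m1) m2).
  rewrite !eval_diag_formal.
  rewrite (feval_ext _ _ (fun t1 => feval (eval_diag formal_sums [s2] fbase m2) (X t1)))
    by (intro; apply eval_diag_formal).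
  rewrite feval_comm. apply feval_ext. intro t2. symmetry. apply eval_diag_formal.
Qed.

Fixpoint lex_compare (a b : list nat) : comparison :=
  match a, b with
  | [], [] => Eq
  | [], _ => Lt
  | _, [] => Gt
  | x :: a, y :: b => match Nat.compare x y with Eq => lex_compare a b | c => c end
  end.

Lemma lex_compare_eq a b : lex_compare a b = Eq -> a = b.
Proof.
  revert b; induction a as [|x a IH]; intros [|y b]; simpl; try discriminate; auto.
  destruct (Nat.compare x y) eqn:E; try discriminate.
  apply Nat.compare_eq in E. intro H. f_equal; auto.
Qed.

Fixpoint finsert (p : K * list nat) (L : formal) : formal :=
  match L with
  | [] => [p]
  | q :: L' => match lex_compare (snd p) (snd q) with
               | Eq => (Kadd (fst p) (fst q), snd q) :: L'
               | Lt => p :: L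
               | Gt => q :: finsert p L'
               end
  end.

Lemma feval_finsert p L H : feval (finsert p L) H = Kadd (Kmul (fst p) (H (snd p))) (feval L H).
Proof.
  induction L as [|q L IH]; simpl; [reflexivity|].
  destruct (lex_compare (snd p) (snd q)) eqn:E; simpl.
  - apply lex_compare_eq in E. rewrite E. ring.
  - reflexivity.
  - rewrite IH. ring.
Qed.

Definition K_eq_dec (x y : K) : {x = y} + {x <> y}.
Proof. decide equality; apply Z.eq_dec. Defined.

Definition formal_eq_dec (A B : formal) : {A = B} + {A <> B}.
Proof. apply list_eq_dec. intros [a s] [b t]. decide equality; [apply list_eq_dec, Nat.eq_dec | apply K_eq_dec]. Defined.

Definition fnorm (L : formal) : formal :=
  filter (fun p => if K_eq_dec (fst p) K0 then false else true) (fold_right finsert [] L).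

Lemma feval_fnorm L H : feval (fnorm L) H = feval L H.
Proof.
  unfold fnorm. transitivity (feval (fold_right finsert [] L) H).
  - induction (fold_right finsert [] L) as [|[c t] L' IH]; simpl; [reflexivity|].
    destruct (K_eq_dec c K0) as [->|]; simpl; rewrite IH; [ring | reflexivity].
  - induction L as [|p L IH]; simpl; [reflexivity|]. rewrite feval_finsert, IH. reflexivity.
Qed.

Definition valid_state (s : list nat) : Prop := Forall (fun x => x < 5) s.

Fixpoint all_states (n : nat) : list (list nat) :=
  match n with
  | O => [[]]
  | S n => flat_map (fun m => map (fun z => z :: m) [0; 1; 2; 3; 4]) (all_states n)
  end.

Lemma in_all_states m : valid_state m -> In m (all_states (length m)).
Proof.
  induction 1 as [|x m Hx Hm IH]; simpl; auto.
  apply in_flat_map. exists m. split; auto.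
  assert (x = 0 \/ x = 1 \/ x = 2 \/ x = 3 \/ x = 4) as HH by lia.
  simpl. destruct HH as [->|[->|[->|[->| ->]]]]; auto 6.
Qed.

Definition check_rel (u v : diagram) (M : nat) (c1 c2 : K) : bool :=
  forallb (fun m => if formal_eq_dec (fnorm (fscale c1 (eval_diag formal_sums u fbase m)))
                                     (fnorm (fscale c2 (eval_diag formal_sums v fbase m)))
                    then true else false) (all_states M).

Lemma check_rel_sound u v M c1 c2 : check_rel u v M c1 c2 = true ->
  forall m H, valid_state m -> length m = M ->
  Kmul c1 (eval_diag Kvals u H m) = Kmul c2 (eval_diag Kvals v H m).
Proof.
  intros C m H Hm <-. unfold check_rel in C. rewrite forallb_forall in C.
  specialize (C m (in_all_states m Hm)).
  destruct (formal_eq_dec _ _) as [E|]; [|discriminate].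
  rewrite !eval_diag_formal, <- !feval_fscale, <- (feval_fnorm (fscale c1 _)),
    <- (feval_fnorm (fscale c2 _)), E. reflexivity.
Qed.

(** * Locality of the state sum *)

Definition slice_fits (j : nat) (odd : bool) (e : elem) (n : nat) : bool :=
  match e, odd with
  | Cup, false => Nat.leb j n
  | Cup, true | _, false => Nat.ltb j n
  | _, true => Nat.ltb (S j) n
  end.
Definition width_after (e : elem) (n : nat) : nat :=
  match e with Cup => S n | Cap => pred n | _ => n end.
Fixpoint diag_fits (d : diagram) (n : nat) : bool :=
  match d with
  | [] => true
  | sl :: d => slice_fits (Nat.div2 (pos sl)) (Nat.odd (pos sl)) (el sl) n &&
               diag_fits d (width_after (el sl) n)
  end.

Lemma nth_frame l m r j : j < length m -> nth (length l + j) (l ++ m ++ r) 0 = nth j m 0.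
Proof.
  intro H. induction l as [|x l IH]; simpl; auto.
  revert j H; induction m as [|y m IHm]; intros [|j] H; simpl in *; try lia; auto.
  apply IHm. lia.
Qed.
Lemma ins_frame l m r j z : j <= length m -> ins_at (length l + j) z (l ++ m ++ r) = l ++ ins_at j z m ++ r.
Proof.
  intro H. induction l as [|x l IH]; simpl; [|rewrite IH; auto].
  revert j H; induction m as [|y m IHm]; intros [|j] H; simpl in *; try lia; auto.
  rewrite IHm; auto. lia.
Qed.
Lemma rem_frame l m r j : j < length m -> rem_at (length l + j) (l ++ m ++ r) = l ++ rem_at j m ++ r.
Proof.
  intro H. induction l as [|x l IH]; simpl; [|rewrite IH; auto].
  revert j H; induction m as [|y m IHm]; intros [|j] H; simpl in *; try lia; auto.
  rewrite IHm; auto. lia.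
Qed.
Lemma set_frame l m r j z : j < length m -> set_at (length l + j) z (l ++ m ++ r) = l ++ set_at j z m ++ r.
Proof.
  intro H. induction l as [|x l IH]; simpl; [|rewrite IH; auto].
  revert j H; induction m as [|y m IHm]; intros [|j] H; simpl in *; try lia; auto.
  rewrite IHm; auto. lia.
Qed.
Lemma length_ins_at j z m : j <= length m -> length (ins_at j z m) = S (length m).
Proof. revert j; induction m as [|y m IH]; intros [|j] H; simpl in *; try lia; auto. rewrite IH; lia. Qed.
Lemma length_rem_at j m : j < length m -> length (rem_at j m) = pred (length m).
Proof. revert j; induction m as [|y m IH]; intros [|j] H; simpl in *; try lia; auto. rewrite IH; lia. Qed.
Lemma length_set_at j z m : length (set_at j z m) = length m.
Proof. revert j; induction m as [|y m IH]; intros [|j]; simpl in *; auto. Qed.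

Lemma div2_double_add n k : Nat.div2 (2 * n + k) = n + Nat.div2 k.
Proof.
  induction n as [|n IH]; [reflexivity|].
  replace (2 * S n + k) with (S (S (2 * n + k))) by lia.
  transitivity (S (Nat.div2 (2 * n + k))); [reflexivity|]. rewrite IH. lia.
Qed.
Lemma odd_double_add n k : Nat.odd (2 * n + k) = Nat.odd k.
Proof.
  induction n as [|n IH]; [reflexivity|].
  replace (2 * S n + k) with (S (S (2 * n + k))) by lia.
  rewrite Nat.odd_succ_succ. exact IH.
Qed.

Lemma step_frame (M : KModule) l m r k e F :
  slice_fits (Nat.div2 k) (Nat.odd k) e (length m) = true ->
  step M (Sl (2 * length l + k) e) F (l ++ m ++ r) = step M (Sl k e) (fun t => F (l ++ t ++ r)) m.
Proof.
  unfold step; cbn [pos el]. rewrite div2_double_add, odd_double_add.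
  destruct e, (Nat.odd k); unfold step_at, sum5, slice_fits; cbn [fold_right]; intro T;
  rewrite ?Nat.leb_le, ?Nat.ltb_lt in T;
  rewrite ?plus_n_Sm, ?ins_frame, ?rem_frame, ?set_frame, ?nth_frame; try lia; reflexivity.
Qed.

Lemma step_ext_width (M : KModule) sl (F F' : list nat -> Vt M) m :
  slice_fits (Nat.div2 (pos sl)) (Nat.odd (pos sl)) (el sl) (length m) = true ->
  (forall t, length t = width_after (el sl) (length m) -> F t = F' t) ->
  step M sl F m = step M sl F' m.
Proof.
  unfold step. destruct (el sl), (Nat.odd (pos sl)); unfold step_at, sum5, slice_fits, width_after;
  cbn [fold_right]; intros T E; rewrite ?Nat.leb_le, ?Nat.ltb_lt in T;
  rewrite ?E; try reflexivity; rewrite ?length_ins_at, ?length_rem_at, ?length_set_at; try lia; reflexivity.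
Qed.

Lemma eval_diag_frame (M : KModule) l r u F m :
  diag_fits u (length m) = true ->
  eval_diag M (shift (2 * length l) u) F (l ++ m ++ r) = eval_diag M u (fun t => F (l ++ t ++ r)) m.
Proof.
  revert m; induction u as [|[k e] u IH]; intros m Hf; [reflexivity|].
  cbn [diag_fits pos el] in Hf. apply andb_true_iff in Hf as [T Hf].
  change (step M (Sl (2 * length l + k) e) (eval_diag M (shift (2 * length l) u) F) (l ++ m ++ r)
          = step M (Sl k e) (eval_diag M u (fun t => F (l ++ t ++ r))) m).
  rewrite step_frame by exact T.
  apply (step_ext_width M (Sl k e)); [exact T|].
  intros t Ht. apply IH. cbn [el] in Ht. rewrite Ht. exact Hf.
Qed.

Lemma tangle_app w d1 d2 w'' : tangle w (d1 ++ d2) w'' <-> exists w', tangle w d1 w' /\ tangle w' d2 w''.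
Proof.
  revert w; induction d1 as [|sl d1 IH]; intro w; simpl.
  - split; [intro H; exists w; auto | intros [w' [-> H]]; exact H].
  - split.
    + intros [H1 H2]. apply IH in H2 as [w' [A B]]. exists w'; auto.
    + intros [w' [[H1 H2] B]]. split; auto. apply IH. exists w'; auto.
Qed.

Lemma link_app3 p u s w w' : tangle 0 p w -> tangle w u w' -> tangle w' s 0 -> link (p ++ u ++ s).
Proof. intros A B C. apply tangle_app. exists w. split; auto. apply tangle_app. eauto. Qed.

Lemma nat_even_odd k : exists j, k = 2 * j + 0 \/ k = 2 * j + 1.
Proof. destruct (Nat.Even_or_Odd k) as [[j ->]|[j ->]]; exists j; lia. Qed.

Lemma slice_fits_tangle p k e h : 2 * p + k + ins e <= 2 * h ->
  slice_fits (Nat.div2 k) (Nat.odd k) e (h - p) = true /\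
  (2 * h - ins e + outs e = 2 * (p + width_after e (h - p))).
Proof.
  destruct (nat_even_odd k) as [j [-> | ->]]; rewrite div2_double_add, odd_double_add;
  destruct e; unfold slice_fits, width_after, ins, outs; cbn [Nat.odd Nat.even Nat.div2 negb];
  rewrite ?Nat.leb_le, ?Nat.ltb_lt; intros; split; lia.
Qed.

Lemma shift_0 u : shift 0 u = u.
Proof. induction u as [|[k e] u IH]; simpl; auto. rewrite IH; reflexivity. Qed.
Lemma shift_shift a b u : shift a (shift b u) = shift (a + b) u.
Proof. induction u as [|[k e] u IH]; simpl; auto. rewrite IH, Nat.add_assoc; reflexivity. Qed.

Lemma tangle_diag_fits u h p w' : tangle (2 * h) (shift (2 * p) u) w' ->
  diag_fits u (h - p) = true /\ exists h', w' = 2 * h'.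
Proof.
  revert h; induction u as [|[k e] u IH]; intros h T; simpl in *.
  - split; auto. exists h; auto.
  - destruct T as [T1 T2]. destruct (slice_fits_tangle p k e h T1) as [A B].
    simpl in B. rewrite B in T2. apply IH in T2 as [C D]. split; auto.
    rewrite A. simpl. replace (p + width_after e (h - p) - p) with (width_after e (h - p)) in C by lia.
    exact C.
Qed.

Lemma tangle_even_width p w : tangle 0 p w -> exists h, w = 2 * h.
Proof. intro T. rewrite <- (shift_0 p) in T. apply (tangle_diag_fits p 0 0 w T). Qed.

(* [M] is the number of regions the nonempty local tangle [u] acts on: [u] fits no
   smaller state. *)
Definition local_rel_ok (u v : diagram) (M : nat) (c1 c2 : K) : bool :=
  negb (Nat.eqb (length u) 0) && diag_fits u M && diag_fits v M &&
  forallb (fun n => negb (diag_fits u n)) (seq 0 M) && check_rel u v M c1 c2.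

Lemma split_state (t : list nat) p M : p + M <= length t ->
  exists l m r, t = l ++ m ++ r /\ length l = p /\ length m = M.
Proof.
  intro H. exists (firstn p t), (firstn M (skipn p t)), (skipn M (skipn p t)).
  rewrite !firstn_skipn. split; auto. rewrite !length_firstn, length_skipn. split; lia.
Qed.

Lemma local_rel_apply u v M c1 c2 p h w' t H :
  local_rel_ok u v M c1 c2 = true -> tangle (2 * h) (shift (2 * p) u) w' ->
  valid_state t -> length t = h ->
  Kmul c1 (eval_diag Kvals (shift (2 * p) u) H t) = Kmul c2 (eval_diag Kvals (shift (2 * p) v) H t).
Proof.
  unfold local_rel_ok. rewrite !andb_true_iff. intros [[[[Hne Fu] Fv] Mmin] C] T Ht Hl.
  assert (Hp : p <= h).
  { destruct u as [|sl u]; [discriminate|]. destruct T as [T _]. simpl in T. lia. }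
  destruct (tangle_diag_fits _ _ _ _ T) as [Fh _].
  assert (HM : M <= h - p).
  { destruct (le_lt_dec M (h - p)) as [|Hlt]; auto.
    rewrite forallb_forall in Mmin. specialize (Mmin (h - p)). rewrite in_seq, Fh in Mmin.
    discriminate (Mmin ltac:(lia)). }
  destruct (split_state t p M ltac:(lia)) as [l [m [r [-> [<- Hm]]]]].
  rewrite !eval_diag_frame by (rewrite Hm; assumption).
  unfold valid_state in Ht. rewrite !Forall_app in Ht.
  apply check_rel_sound with (M := M); tauto.
Qed.

(** * Behaviour under local moves *)

Definition sqrt5_power (c : K) : Prop := exists n, c = Kpow sqrt5 n.

Lemma sqrt5_power_mul a b : sqrt5_power a -> sqrt5_power b -> sqrt5_power (Kmul a b).
Proof. intros [n ->] [m ->]. exists (n + m). symmetry. apply Kpow_add. Qed.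

Lemma valid_ins_at j z s : valid_state s -> z < 5 -> valid_state (ins_at j z s).
Proof. intros H Hz. revert j; unfold valid_state in *. induction H; intros [|j]; simpl; repeat first [apply Forall_nil | apply Forall_cons]; auto. Qed.
Lemma valid_rem_at j s : valid_state s -> valid_state (rem_at j s).
Proof. intro H. revert j; unfold valid_state in *. induction H; intros [|j]; simpl; repeat first [apply Forall_nil | apply Forall_cons]; auto. Qed.
Lemma valid_set_at j z s : valid_state s -> z < 5 -> valid_state (set_at j z s).
Proof. intros H Hz. revert j; unfold valid_state in *. induction H; intros [|j]; simpl; repeat first [apply Forall_nil | apply Forall_cons]; auto. Qed.
Lemma valid_nth j s : valid_state s -> j < length s -> nth j s 0 < 5.
Proof. intros H Hj. unfold valid_state in H. rewrite Forall_forall in H. apply H, nth_In, Hj. Qed.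

Lemma step_ext_valid sl (F F' : list nat -> K) s :
  slice_fits (Nat.div2 (pos sl)) (Nat.odd (pos sl)) (el sl) (length s) = true -> valid_state s ->
  (forall t, valid_state t -> length t = width_after (el sl) (length s) -> F t = F' t) ->
  step Kvals sl F s = step Kvals sl F' s.
Proof.
  unfold step. destruct (el sl), (Nat.odd (pos sl)); unfold step_at, sum5, slice_fits, width_after;
  cbn [fold_right]; intros T Hs E; rewrite ?Nat.leb_le, ?Nat.ltb_lt in T;
  rewrite ?E; try reflexivity;
  repeat first [ apply valid_ins_at | apply valid_rem_at | apply valid_set_at | apply valid_nth
               | assumption | lia | rewrite length_ins_at | rewrite length_rem_at
               | rewrite length_set_at | reflexivity ].
Qed.

Lemma eval_diag_ext_tangle d h w (F F' : list nat -> K) : tangle (2 * h) d w ->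
  (forall t, valid_state t -> (2 * length t) = w -> F t = F' t) ->
  forall s, valid_state s -> length s = h -> eval_diag Kvals d F s = eval_diag Kvals d F' s.
Proof.
  revert h; induction d as [|[k e] d IH]; intros h T E s Hs Hl; simpl in *.
  - apply E; auto. lia.
  - destruct T as [T1 T2].
    destruct (slice_fits_tangle 0 k e h ltac:(lia)) as [A B].
    rewrite Nat.sub_0_r in A, B. simpl in B. rewrite B in T2.
    apply (step_ext_valid (Sl k e)); simpl; rewrite ?Hl; auto.
    intros t Ht Hlt. apply (IH _ T2); auto.
Qed.

Lemma goeritz_context p u v s h w' c1 c2 :
  tangle 0 p (2 * h) -> tangle w' s 0 ->
  (forall H t, valid_state t -> length t = h ->
     Kmul c1 (eval_diag Kvals u H t) = Kmul c2 (eval_diag Kvals v H t)) ->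
  Kmul c1 (goeritz (p ++ u ++ s)) = Kmul c2 (goeritz (p ++ v ++ s)).
Proof.
  intros Tp Ts E. unfold goeritz. rewrite !eval_diag_app, <- !eval_diag_scale.
  apply (eval_diag_ext_tangle p 0 (2 * h)); auto; [|constructor].
  intros t Ht Hl. rewrite !eval_diag_app. apply E; auto. lia.
Qed.

Definition local_scaled (u v : diagram) (h : nat) : Prop :=
  exists c1 c2, sqrt5_power c1 /\ sqrt5_power c2 /\
    forall H t, valid_state t -> length t = h ->
      Kmul c1 (eval_diag Kvals u H t) = Kmul c2 (eval_diag Kvals v H t).

(* The Turaev moves of [basic] at position [k], with the commutation of two slices
   restricted to adjacent ones; the other commutations are handled by [comm_far]. *)
Definition local_moves (k : nat) : list (diagram * diagram) :=
  [ ([Sl (S k) Cup; Sl k Cap], []); ([Sl k Cup; Sl (S k) Cap], []);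
    ([Sl k Xp; Sl k Xn], []); ([Sl k Xn; Sl k Xp], []);
    ([Sl k Xp; Sl (S k) Xp; Sl k Xp], [Sl (S k) Xp; Sl k Xp; Sl (S k) Xp]);
    ([Sl k Cup; Sl k Xp], [Sl k Cup]); ([Sl k Cup; Sl k Xn], [Sl k Cup]);
    ([Sl k Xp; Sl k Cap], [Sl k Cap]); ([Sl k Xn; Sl k Cap], [Sl k Cap]);
    ([Sl k Cup; Sl (S k) Xp], [Sl (S k) Cup; Sl k Xn]);
    ([Sl k Cup; Sl (S k) Xn], [Sl (S k) Cup; Sl k Xp]);
    ([Sl k Xp; Sl (S k) Cap], [Sl (S k) Xn; Sl k Cap]);
    ([Sl k Xn; Sl (S k) Cap], [Sl (S k) Xp; Sl k Cap]) ] ++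
  flat_map (fun a => map (fun b => ([Sl k a; Sl (k + outs a) b], [Sl (k + ins a) b; Sl k a]))
                         [Cup; Cap; Xp; Xn]) [Cup; Cap; Xp; Xn].

Lemma local_moves_shift j i :
  local_moves (2 * j + i) = map (fun uv => (shift (2 * j) (fst uv), shift (2 * j) (snd uv))) (local_moves i).
Proof. unfold local_moves, shift. simpl. rewrite <- !plus_n_Sm, !Nat.add_assoc. reflexivity. Qed.

Definition has_witness (u v : diagram) : bool :=
  existsb (fun '(M, a, b) => local_rel_ok u v M (Kpow sqrt5 a) (Kpow sqrt5 b))
    (list_prod (list_prod (seq 0 4) (seq 0 3)) (seq 0 3)).

Lemma local_moves_witnessed :
  forallb (fun uv => has_witness (fst uv) (snd uv)) (local_moves 0 ++ local_moves 1) = true.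
Proof. vm_compute. reflexivity. Qed.

Lemma local_move_scaled u v k h w' :
  In (u, v) (local_moves k) -> tangle (2 * h) u w' -> local_scaled u v h.
Proof.
  intros Hin T. destruct (nat_even_odd k) as [j Hk].
  assert (Hw : exists u0 v0, has_witness u0 v0 = true /\ u = shift (2 * j) u0 /\ v = shift (2 * j) v0).
  { assert (Hin' : exists i, (i = 0 \/ i = 1) /\ In (u, v) (local_moves (2 * j + i))).
    { destruct Hk as [-> | ->]; eauto. }
    destruct Hin' as [i [Hi Hin']]. rewrite local_moves_shift, in_map_iff in Hin'.
    destruct Hin' as [[u0 v0] [E Hin0]]. injection E as <- <-.
    pose proof local_moves_witnessed as W. rewrite forallb_forall in W.
    exists u0, v0. split; [|split; reflexivity].
    apply (W (u0, v0)), in_or_app. destruct Hi as [-> | ->]; tauto. }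
  destruct Hw as [u0 [v0 [Hw [-> ->]]]].
  unfold has_witness in Hw. rewrite existsb_exists in Hw. destruct Hw as [[[M a] b] [_ Hok]].
  exists (Kpow sqrt5 a), (Kpow sqrt5 b). split; [exists a; reflexivity|]. split; [exists b; reflexivity|].
  intros H t Ht Hl. eapply local_rel_apply; eauto.
Qed.

(* The number of regions a slice [e] at a position of parity [i0] reads, and leaves. *)
Definition regions_in (e : elem) (i0 : nat) : nat :=
  match e, i0 with Cup, 0 => 0 | Cup, _ => 1 | _, 0 => 1 | _, _ => 2 end.
Definition regions_out (e : elem) (i0 : nat) : nat := width_after e (regions_in e i0).

Lemma step_comm_frame a b i0 j0 l m1 g m2 r H :
  slice_fits (Nat.div2 i0) (Nat.odd i0) a (length m1) = true ->
  slice_fits (Nat.div2 j0) (Nat.odd j0) b (length m2) = true ->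
  eval_diag Kvals [Sl (2 * length l + i0) a;
                   Sl (2 * (length l + width_after a (length m1) + length g) + j0) b] H
    (l ++ m1 ++ g ++ m2 ++ r) =
  eval_diag Kvals [Sl (2 * (length l + length m1 + length g) + j0) b;
                   Sl (2 * length l + i0) a] H
    (l ++ m1 ++ g ++ m2 ++ r).
Proof.
  intros Ta Tb. cbn [eval_diag fold_right].
  rewrite step_frame by exact Ta.
  transitivity (step Kvals (Sl i0 a)
    (fun t1 => step Kvals (Sl j0 b) (fun t2 => H (l ++ t1 ++ g ++ t2 ++ r)) m2) m1).
  { apply (step_ext_width Kvals (Sl i0 a)); [exact Ta|]. intros t1 Ht1. cbn [el] in Ht1.
    replace (l ++ t1 ++ g ++ m2 ++ r) with ((l ++ t1 ++ g) ++ m2 ++ r) by (rewrite <- !app_assoc; reflexivity).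
    replace (2 * (length l + width_after a (length m1) + length g) + j0)
      with (2 * length (l ++ t1 ++ g) + j0) by (rewrite !length_app; lia).
    rewrite step_frame by exact Tb. apply step_ext. intro t2. rewrite <- !app_assoc. reflexivity. }
  rewrite step_comm.
  replace (l ++ m1 ++ g ++ m2 ++ r) with ((l ++ m1 ++ g) ++ m2 ++ r) by (rewrite <- !app_assoc; reflexivity).
  replace (2 * (length l + length m1 + length g) + j0)
    with (2 * length (l ++ m1 ++ g) + j0) by (rewrite !length_app; lia).
  rewrite step_frame by exact Tb.
  apply (step_ext_width Kvals (Sl j0 b)); [exact Tb|]. intros t2 _.
  rewrite <- !app_assoc, step_frame by exact Ta. reflexivity.
Qed.

Lemma comm_far a b p i0 q j0 h w' : i0 <= 1 -> j0 <= 1 -> p + regions_out a i0 <= q ->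
  tangle (2 * h) [Sl (2 * p + i0) a; Sl (2 * q + j0) b] w' ->
  local_scaled [Sl (2 * p + i0) a; Sl (2 * q + j0) b]
               [Sl (2 * q + j0 + ins a - outs a) b; Sl (2 * p + i0) a] h.
Proof.
  intros Hi0 Hj0 Hpq T. exists K1, K1. split; [exists 0; reflexivity|]. split; [exists 0; reflexivity|].
  intros H t _ Hl. f_equal.
  assert (Hlen : p + regions_in a i0 + (q - p - regions_out a i0) + regions_in b j0 <= h).
  { simpl in T. destruct a, b, i0 as [|[|]], j0 as [|[|]]; simpl in *; lia. }
  destruct (split_state t p (regions_in a i0) ltac:(lia)) as [l [m1 [rest [-> [Hl1 Hm1]]]]].
  rewrite !length_app in Hl.
  destruct (split_state rest (q - p - regions_out a i0) (regions_in b j0) ltac:(lia))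
    as [g [m2 [r [-> [Hg1 Hm2]]]]].
  pose proof (step_comm_frame a b i0 j0 l m1 g m2 r H) as C.
  rewrite Hm1, Hm2, Hl1, Hg1 in C.
  replace (2 * (p + width_after a (regions_in a i0) + (q - p - regions_out a i0)) + j0)
    with (2 * q + j0) in C by (unfold regions_out in *; lia).
  replace (2 * (p + regions_in a i0 + (q - p - regions_out a i0)) + j0)
    with (2 * q + j0 + ins a - outs a) in C
    by (unfold regions_out in *; destruct a, i0 as [|[|]]; simpl in *; lia).
  apply C; destruct a, b, i0 as [|[|]], j0 as [|[|]]; try lia; reflexivity.
Qed.

Lemma comm_local_scaled a i b j h w' : i + outs a <= j -> tangle (2 * h) [Sl i a; Sl j b] w' ->
  local_scaled [Sl i a; Sl j b] [Sl (j + ins a - outs a) b; Sl i a] h.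
Proof.
  intros Hij T. destruct (Nat.eq_dec j (i + outs a)) as [->|Hne].
  - replace (i + outs a + ins a - outs a) with (i + ins a) by lia.
    apply (local_move_scaled _ _ i h w'); [|exact T].
    unfold local_moves. apply in_or_app. right. apply in_flat_map. exists a.
    split; [destruct a; simpl; tauto|]. apply in_map_iff. exists b. split; [reflexivity|].
    destruct b; simpl; tauto.
  - destruct (nat_even_odd i) as [p [-> | ->]]; destruct (nat_even_odd j) as [q [-> | ->]];
    (eapply comm_far; [lia | lia | destruct a; simpl in *; lia | exact T]).
Qed.

Lemma basic_local_scaled u v h w' : basic u v -> tangle (2 * h) u w' -> local_scaled u v h.
Proof.
  destruct 1 as [a i b j Hij | k | k | k | k | k | k | k | k | k | k | k | k | k]; intro T;
  [exact (comm_local_scaled a i b j h w' Hij T)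
  | apply (local_move_scaled _ _ k h w'); [unfold local_moves; simpl; tauto | exact T] ..].
Qed.

(** * The Goeritz sum under isotopy, 5-moves and (2,2)-moves *)

Definition sign (b : bool) : K := if b then Kopp K1 else K1.

Definition goeritz_rel (b : bool) (D1 D2 : diagram) : Prop :=
  exists c1 c2, sqrt5_power c1 /\ sqrt5_power c2 /\
    Kmul c1 (goeritz D1) = Kmul (sign b) (Kmul c2 (goeritz D2)).

Lemma goeritz_rel_refl D : goeritz_rel false D D.
Proof. exists K1, K1. split; [exists 0; reflexivity|]. split; [exists 0; reflexivity|]. simpl. ring. Qed.

Lemma goeritz_rel_sym b D E : goeritz_rel b D E -> goeritz_rel b E D.
Proof.
  intros [c1 [c2 [P1 [P2 H]]]]. exists c2, c1. repeat split; auto.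
  transitivity (Kmul (sign b) (Kmul (sign b) (Kmul c2 (goeritz E)))); [destruct b; simpl; ring|].
  rewrite <- H. reflexivity.
Qed.

Lemma goeritz_rel_trans b b' D E F :
  goeritz_rel b D E -> goeritz_rel b' E F -> goeritz_rel (xorb b b') D F.
Proof.
  intros [c1 [c2 [P1 [P2 H]]]] [c3 [c4 [P3 [P4 H']]]].
  exists (Kmul c3 c1), (Kmul c2 c4). repeat split; try apply sqrt5_power_mul; auto.
  transitivity (Kmul c3 (Kmul c1 (goeritz D))); [ring|]. rewrite H.
  transitivity (Kmul (sign b) (Kmul c2 (Kmul c3 (goeritz E)))); [ring|]. rewrite H'.
  destruct b, b'; simpl; ring.
Qed.

Lemma iso_step_goeritz D1 D2 : iso_step D1 D2 -> goeritz_rel false D1 D2 /\ link D1 /\ link D2.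
Proof.
  intros [p [u [v [s [w [w' [Tp [Tu [Tv [Ts [B [-> ->]]]]]]]]]]]].
  split; [|split; eapply link_app3; eauto].
  destruct (tangle_even_width p w Tp) as [h ->].
  destruct (basic_local_scaled u v h w' B Tu) as [c1 [c2 [P1 [P2 E]]]].
  exists c1, c2. repeat split; auto. rewrite (goeritz_context p u v s h w' c1 c2); auto.
  simpl. ring.
Qed.

Lemma iso_goeritz D E : iso D E -> goeritz_rel false D E.
Proof.
  induction 1 as [D E H | D | D E _ IH | D E F _ IH1 _ IH2].
  - apply iso_step_goeritz in H. tauto.
  - apply goeritz_rel_refl.
  - apply goeritz_rel_sym, IH.
  - exact (goeritz_rel_trans false false D E F IH1 IH2).
Qed.

Lemma iso_link D E : iso D E -> (link D <-> link E).
Proof. induction 1; try tauto. apply iso_step_goeritz in H. tauto. Qed.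

Lemma local_move_goeritz T M0 M1 c0 c1 D1 D2 :
  local_rel_ok (shift 0 T) [] M0 K1 c0 = true -> local_rel_ok (shift 1 T) [] M1 K1 c1 = true ->
  (forall k w, k + 2 <= w -> tangle w (shift k T) w) ->
  local_move T D1 D2 ->
  (goeritz D2 = Kmul c0 (goeritz D1) \/ goeritz D2 = Kmul c1 (goeritz D1)) /\ link D1 /\ link D2.
Proof.
  intros O0 O1 TT [p [s [w [k [Tp [Hk [Ts [-> ->]]]]]]]].
  destruct (tangle_even_width p w Tp) as [h ->].
  split; [|split; [apply (link_app3 p [] s (2 * h) (2 * h)) | apply (link_app3 p _ s (2 * h) (2 * h))];
           simpl; auto].
  assert (Hloc : forall i c M, local_rel_ok (shift i T) [] M K1 c = true -> forall j, k = (2 * j + i) ->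
            goeritz (p ++ shift k T ++ s) = Kmul c (goeritz (p ++ s))).
  { intros i c M O j ->.
    transitivity (Kmul K1 (goeritz (p ++ shift (2 * j + i) T ++ s))); [ring|].
    change (p ++ s) with (p ++ [] ++ s).
    apply (goeritz_context p _ [] s h (2 * h)); auto.
    intros H t Ht Hl. rewrite <- shift_shift.
    change (eval_diag Kvals [] H t) with (eval_diag Kvals (shift (2 * j) []) H t).
    apply (local_rel_apply _ _ M _ _ j h (2 * h)); auto.
    rewrite shift_shift. apply TT. lia. }
  destruct (nat_even_odd k) as [j [Hj | Hj]];
    [left; apply (Hloc 0 c0 M0 O0 j) | right; apply (Hloc 1 c1 M1 O1 j)]; exact Hj.
Qed.

Lemma tangle_shift_T5 c k w : c = Xp \/ c = Xn -> k + 2 <= w -> tangle w (shift k (T5 c)) w.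
Proof. intros [-> | ->] H; unfold T5; simpl; repeat split; lia. Qed.

Lemma tangle_shift_T52 c k w : c = Xp \/ c = Xn -> k + 2 <= w -> tangle w (shift k (T52 c)) w.
Proof. intros [-> | ->] H; unfold T52, htw, vtw, tinf; simpl; repeat split; lia. Qed.

Lemma five_move_goeritz c D1 D2 : c = Xp \/ c = Xn -> local_move (T5 c) D1 D2 ->
  goeritz_rel false D1 D2 /\ link D1 /\ link D2.
Proof.
  intros Hc Lm.
  assert (O0 : local_rel_ok (shift 0 (T5 c)) [] 1 K1 (Kpow sqrt5 5) = true)
    by (destruct Hc as [-> | ->]; vm_compute; reflexivity).
  assert (O1 : local_rel_ok (shift 1 (T5 c)) [] 2 K1 K1 = true)
    by (destruct Hc as [-> | ->]; vm_compute; reflexivity).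
  destruct (local_move_goeritz _ _ _ _ _ D1 D2 O0 O1 (fun k w => tangle_shift_T5 c k w Hc) Lm)
    as [[E | E] HL]; (split; [|exact HL]); unfold goeritz_rel; rewrite E.
  - exists (Kpow sqrt5 5), K1. repeat split; [exists 5 | exists 0 | simpl; ring]; reflexivity.
  - exists K1, K1. repeat split; [exists 0 | exists 0 | simpl; ring]; reflexivity.
Qed.

Lemma two_two_move_goeritz c D1 D2 : c = Xp \/ c = Xn -> local_move (T52 c) D1 D2 ->
  goeritz_rel true D1 D2 /\ link D1 /\ link D2.
Proof.
  intros Hc Lm.
  assert (O0 : local_rel_ok (shift 0 (T52 c)) [] 1 K1 (Kopp (Kpow sqrt5 3)) = true)
    by (destruct Hc as [-> | ->]; vm_compute; reflexivity).
  assert (O1 : local_rel_ok (shift 1 (T52 c)) [] 2 K1 (Kopp sqrt5) = true)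
    by (destruct Hc as [-> | ->]; vm_compute; reflexivity).
  destruct (local_move_goeritz _ _ _ _ _ D1 D2 O0 O1 (fun k w => tangle_shift_T52 c k w Hc) Lm)
    as [[E | E] HL]; (split; [|exact HL]); unfold goeritz_rel; rewrite E.
  - exists (Kpow sqrt5 3), K1. repeat split; [exists 3 | exists 0 | simpl; ring]; reflexivity.
  - exists sqrt5, K1. repeat split; [exists 1; simpl; ring | exists 0; reflexivity | simpl; ring].
Qed.

Lemma equiv5_goeritz D E : equiv5 D E -> goeritz_rel false D E /\ (link D <-> link E).
Proof.
  induction 1 as [D E H | D | D E _ IH | D E F _ IH1 _ IH2].
  - destruct H as [H | [H | H]];
      [apply iso_step_goeritz in H | apply (five_move_goeritz Xp) in H | apply (five_move_goeritz Xn) in H];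
      tauto.
  - split; [apply goeritz_rel_refl | tauto].
  - split; [apply goeritz_rel_sym | ]; tauto.
  - split; [exact (goeritz_rel_trans false false D E F (proj1 IH1) (proj1 IH2)) | tauto].
Qed.

Lemma one22_goeritz D E : one22 D E -> goeritz_rel true D E /\ link D.
Proof.
  intros [E1 [E2 [I1 [I2 H]]]].
  assert (H12 : goeritz_rel true E1 E2 /\ link E1).
  { destruct H as [H | [H | [H | H]]];
      [ apply (two_two_move_goeritz Xp) in H | apply (two_two_move_goeritz Xn) in H
      | apply (two_two_move_goeritz Xp) in H | apply (two_two_move_goeritz Xn) in H ]; auto;
      [ tauto | tauto | split; [apply goeritz_rel_sym|]; tauto .. ]. }
  destruct H12 as [H12 L1]. split; [|apply (iso_link D E1 I1), L1].
  exact (goeritz_rel_trans false true D E1 E (iso_goeritz D E1 I1)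
           (goeritz_rel_trans true false E1 E2 E H12 (iso_goeritz E2 E I2))).
Qed.

Lemma chain22_goeritz n D E : chain22 n D E -> goeritz_rel (Nat.odd n) D E.
Proof.
  induction 1 as [D E H | n D E F H _ IH]; [apply iso_goeritz, H|].
  rewrite Nat.odd_succ, <- Nat.negb_odd.
  replace (negb (Nat.odd n)) with (xorb true (Nat.odd n)) by reflexivity.
  exact (goeritz_rel_trans _ _ D E F (proj1 (one22_goeritz D E H)) IH).
Qed.

Lemma chain22_link n D E : chain22 (S n) D E -> link D.
Proof. inversion 1. exact (proj2 (one22_goeritz D E0 H1)). Qed.

(** * Sums over valuations *)

Definition update (r : nat -> nat) (n v : nat) : nat -> nat := fun i => if Nat.eqb i n then v else r i.

Fixpoint vsum (n N : nat) (mu : nat -> nat) (f : (nat -> nat) -> K) : K :=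
  match N with O => f mu | S N => sum5 Kvals (fun v => vsum (S n) N (update mu n v) f) end.

Definition in_range (n N : nat) (mu r : nat -> nat) : Prop :=
  (forall i, i < n \/ n + N <= i -> r i = mu i) /\ (forall i, r i < 5).

Definition zero_val : nat -> nat := fun _ => 0.

Definition val_add (r h : nat -> nat) : nat -> nat := fun i => ((r i + h i) mod 5).

Lemma sum5_unfold (f : nat -> K) :
  sum5 Kvals f = Kadd (f 0) (Kadd (f 1) (Kadd (f 2) (Kadd (f 3) (Kadd (f 4) K0)))).
Proof. reflexivity. Qed.

Lemma sum5_ext (f g : nat -> K) : (forall z, z < 5 -> f z = g z) -> sum5 Kvals f = sum5 Kvals g.
Proof. intro E. rewrite !sum5_unfold, !E by lia. reflexivity. Qed.

Lemma sum5_rotate (F : nat -> K) a : a < 5 -> sum5 Kvals (fun v => F ((v + a) mod 5)) = sum5 Kvals F.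
Proof.
  intro Ha. rewrite !sum5_unfold.
  assert (a = 0 \/ a = 1 \/ a = 2 \/ a = 3 \/ a = 4) as [->|[->|[->|[->| ->]]]] by lia; simpl; ring.
Qed.

Lemma vsum_add n N mu f g : vsum n N mu (fun r => Kadd (f r) (g r)) = Kadd (vsum n N mu f) (vsum n N mu g).
Proof. revert n mu; induction N as [|N IH]; intros n mu; simpl; [reflexivity|]. rewrite !sum5_unfold, !IH. ring. Qed.

Lemma vsum_scale n N mu c f : vsum n N mu (fun r => Kmul c (f r)) = Kmul c (vsum n N mu f).
Proof. revert n mu; induction N as [|N IH]; intros n mu; simpl; [reflexivity|]. rewrite !sum5_unfold, !IH. ring. Qed.

Lemma vsum_scale_r n N mu c f : vsum n N mu (fun r => Kmul (f r) c) = Kmul (vsum n N mu f) c.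
Proof. revert n mu; induction N as [|N IH]; intros n mu; simpl; [reflexivity|]. rewrite !sum5_unfold, !IH. ring. Qed.

Lemma vsum_zero n N mu : vsum n N mu (fun _ => K0) = K0.
Proof. revert n mu; induction N as [|N IH]; intros n mu; simpl; [reflexivity|]. rewrite !sum5_unfold, !IH. ring. Qed.

Lemma Kconj_vsum n N mu f : Kconj (vsum n N mu f) = vsum n N mu (fun r => Kconj (f r)).
Proof.
  revert n mu; induction N as [|N IH]; intros n mu; simpl; [reflexivity|].
  rewrite !sum5_unfold, !Kconj_add, !IH. reflexivity.
Qed.

Lemma update_lt r n v : (forall i, r i < 5) -> v < 5 -> forall i, update r n v i < 5.
Proof. intros H Hv i. unfold update. destruct (Nat.eqb i n); auto. Qed.

Lemma in_range_update n N mu v r : in_range (S n) N (update mu n v) r -> in_range n (S N) mu r.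
Proof.
  intros [R1 R2]. split; auto. intros i Hi. rewrite R1 by lia. unfold update.
  destruct (Nat.eqb_spec i n); [lia | reflexivity].
Qed.

Lemma vsum_ext n N mu f g : (forall i, mu i < 5) ->
  (forall r, in_range n N mu r -> f r = g r) -> vsum n N mu f = vsum n N mu g.
Proof.
  revert n mu; induction N as [|N IH]; intros n mu Hmu E; simpl.
  - apply E. split; auto.
  - apply sum5_ext. intros z Hz. apply IH; [apply update_lt; auto|].
    intros r R. apply E, (in_range_update _ _ _ z), R.
Qed.

Lemma vsum_base_ext n N mu mu' f : (forall i, i < n \/ n + N <= i -> mu i = mu' i) ->
  vsum n N mu f = vsum n N mu' f.
Proof.
  revert n mu mu'; induction N as [|N IH]; intros n mu mu' E; simpl.
  - f_equal. apply functional_extensionality. intro i. apply E. lia.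
  - apply sum5_ext. intros z Hz. apply IH. intros i Hi. unfold update.
    destruct (Nat.eqb_spec i n); auto. apply E. lia.
Qed.

Lemma vsum_factor n N mu g f : (forall i, mu i < 5) ->
  (forall r, in_range n N mu r -> g r = g mu) ->
  vsum n N mu (fun r => Kmul (g r) (f r)) = Kmul (g mu) (vsum n N mu f).
Proof. intros Hmu E. rewrite <- vsum_scale. apply vsum_ext; auto. intros r R. rewrite E; auto. Qed.

Lemma vsum_comm n N mu m M nu (X : (nat -> nat) -> (nat -> nat) -> K) :
  vsum n N mu (fun a => vsum m M nu (X a)) = vsum m M nu (fun b => vsum n N mu (fun a => X a b)).
Proof.
  revert n mu; induction N as [|N IH]; intros n mu; simpl; [reflexivity|].
  transitivity (vsum m M nu (fun b => Kadd (vsum (S n) N (update mu n 0) (fun a => X a b))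
    (Kadd (vsum (S n) N (update mu n 1) (fun a => X a b)) (Kadd (vsum (S n) N (update mu n 2) (fun a => X a b))
    (Kadd (vsum (S n) N (update mu n 3) (fun a => X a b)) (Kadd (vsum (S n) N (update mu n 4) (fun a => X a b)) K0)))))).
  - rewrite !vsum_add, vsum_zero, <- !IH. reflexivity.
  - reflexivity.
Qed.

Lemma vsum_update_below n N mu k c f : k < n ->
  vsum n N mu (fun r => f (update r k c)) = vsum n N (update mu k c) f.
Proof.
  revert n mu; induction N as [|N IH]; intros n mu Hk; simpl; [reflexivity|].
  apply sum5_ext. intros z Hz. rewrite IH by lia. f_equal.
  apply functional_extensionality. intro i. unfold update.
  destruct (Nat.eqb_spec i k), (Nat.eqb_spec i n); subst; auto. lia.
Qed.

Lemma vsum_translate N n mu h f : (forall i, mu i < 5) -> (forall i, h i < 5) ->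
  (forall i, i < n -> h i = 0) ->
  vsum n N mu (fun r => f (val_add r h)) = vsum n N (val_add mu h) f.
Proof.
  revert n mu h f; induction N as [|N IH]; intros n mu h f Hmu Hh H0; simpl; [reflexivity|].
  rewrite <- (sum5_rotate (fun v => vsum (S n) N (update (val_add mu h) n v) f) (h n)) by auto.
  apply sum5_ext. intros v Hv.
  set (h' := update h n 0).
  set (g := fun q => f (update q n ((v + h n) mod 5))).
  transitivity (vsum (S n) N (update mu n v) (fun r => g (val_add r h'))).
  { apply vsum_ext; [apply update_lt; auto|]. intros r [R1 R2]. unfold g. f_equal.
    apply functional_extensionality. intro i. unfold val_add, h', update.
    destruct (Nat.eqb_spec i n) as [->|]; [rewrite R1 by lia; unfold update; rewrite Nat.eqb_refl|];
      reflexivity. }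
  rewrite IH.
  - unfold g. rewrite vsum_update_below by lia. apply vsum_base_ext. intros i _.
    unfold val_add, h', update. destruct (Nat.eqb_spec i n); reflexivity.
  - apply update_lt; auto.
  - intro i; unfold h', update. destruct (Nat.eqb i n); auto. lia.
  - intros i Hi. unfold h', update. destruct (Nat.eqb_spec i n); auto. apply H0. lia.
Qed.

Lemma vsum_translate_zero N r F : in_range 0 N zero_val r ->
  vsum 0 N zero_val (fun h => F (val_add h r)) = vsum 0 N zero_val F.
Proof.
  intros [R1 R2]. rewrite vsum_translate; auto; [|intro; unfold zero_val; lia].
  apply vsum_base_ext. intros i Hi. unfold val_add, zero_val. rewrite R1 by lia. reflexivity.
Qed.

Lemma in_range_zero_val N : in_range 0 N zero_val zero_val.
Proof. split; auto. intro; unfold zero_val; lia. Qed.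

Lemma vsum_nat_ge n N mu f r0 m0 : (forall i, mu i < 5) ->
  (forall r, in_range n N mu r -> exists m, f r = Knat m) ->
  in_range n N mu r0 -> f r0 = Knat m0 ->
  exists m, vsum n N mu f = Knat m /\ (m0 <= m).
Proof.
  revert n mu r0 m0; induction N as [|N IH]; intros n mu r0 m0 Hmu E R0 F0; simpl.
  - replace mu with r0 in * by (apply functional_extensionality; intro i; apply R0; lia).
    exists m0. split; [exact F0 | lia].
  - assert (Hs : forall v, v < 5 -> exists m, vsum (S n) N (update mu n v) f = Knat m /\
                   (v = r0 n -> m0 <= m)).
    { intros v Hv.
      assert (E' : forall r, in_range (S n) N (update mu n v) r -> exists m, f r = Knat m)
        by (intros r R; apply E, (in_range_update _ _ _ v), R).
      destruct (Nat.eq_dec v (r0 n)) as [->|Hne].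
      - destruct (IH (S n) (update mu n (r0 n)) r0 m0) as [m [Hm Hle]]; auto.
        + apply update_lt; auto.
        + destruct R0 as [R1 R2]. split; auto. intros i Hi. unfold update.
          destruct (Nat.eqb_spec i n) as [->|]; [reflexivity|]. apply R1. lia.
        + exists m. auto.
      - destruct (E' (update mu n v)) as [m1 Hm1].
        { split; [reflexivity | apply update_lt; auto]. }
        destruct (IH (S n) (update mu n v) (update mu n v) m1) as [m [Hm _]]; auto.
        + apply update_lt; auto.
        + split; [reflexivity | apply update_lt; auto].
        + exists m. split; [exact Hm | intro; contradiction]. }
    destruct (Hs 0) as [a0 [A0 B0]]; [lia|]. destruct (Hs 1) as [a1 [A1 B1]]; [lia|].
    destruct (Hs 2) as [a2 [A2 B2]]; [lia|]. destruct (Hs 3) as [a3 [A3 B3]]; [lia|].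
    destruct (Hs 4) as [a4 [A4 B4]]; [lia|].
    exists (a0 + a1 + a2 + a3 + a4). split.
    + rewrite sum5_unfold, A0, A1, A2, A3, A4. unfold Knat, Kadd, K0; cbn [k0 k1 k2 k3]. f_equal; lia.
    + destruct R0 as [_ R2]. specialize (R2 n).
      assert (r0 n = 0 \/ r0 n = 1 \/ r0 n = 2 \/ r0 n = 3 \/ r0 n = 4)
        as [Hv|[Hv|[Hv|[Hv|Hv]]]] by lia; symmetry in Hv;
        [specialize (B0 Hv) | specialize (B1 Hv) | specialize (B2 Hv) | specialize (B3 Hv) | specialize (B4 Hv)]; lia.
Qed.

(** * The Goeritz sum as a Gauss sum *)

Definition satisfies (C : list (nat * nat)) (r : nat -> nat) : bool :=
  forallb (fun p => Nat.eqb (r (fst p)) (r (snd p))) C.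
Definition constraint (C : list (nat * nat)) (r : nat -> nat) : K :=
  if satisfies C r then K1 else K0.

Definition square_term (t : Z * nat * nat) (r : nat -> nat) : Z :=
  let '(e, a, b) := t in (e * (Z.of_nat (r a) - Z.of_nat (r b)) * (Z.of_nat (r a) - Z.of_nat (r b)))%Z.
Definition quad_form (T : list (Z * nat * nat)) (r : nat -> nat) : Z :=
  fold_right (fun t acc => (square_term t r + acc)%Z) 0%Z T.
Definition gauss_term (C : list (nat * nat)) (T : list (Z * nat * nat)) (r : nat -> nat) : K :=
  Kmul (constraint C r) (zpow (quad_form T r)).

(* [compile d sym n] turns the state sum of [d] into a Gauss sum: [sym] names by variables
   the regions of the bottom state, [n] is the next fresh variable; it returns the number of
   new variables, the equalities imposed by caps, and the quadratic terms of crossings. *)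
Fixpoint compile (d : diagram) (sym : list nat) (n : nat) : nat * list (nat * nat) * list (Z * nat * nat) :=
  match d with
  | [] => (0, [], [])
  | sl :: d =>
    let j := Nat.div2 (pos sl) in
    match el sl, Nat.odd (pos sl) with
    | Cup, false => let '(N, C, T) := compile d (ins_at j n sym) (S n) in (S N, C, T)
    | Cup, true => compile d (ins_at (S j) (nth j sym 0) sym) n
    | Cap, false => compile d (rem_at j sym) n
    | Cap, true => let '(N, C, T) := compile d (rem_at (S j) sym) n in
                   (N, (nth j sym 0, nth (S j) sym 0) :: C, T)
    | e, false => let '(N, C, T) := compile d (set_at j n sym) (S n) in
                  (S N, C, (cross_sign e false, nth j sym 0, n) :: T)
    | e, true => let '(N, C, T) := compile d sym n in
                 (N, C, (cross_sign e true, nth j sym 0, nth (S j) sym 0) :: T)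
    end
  end.

Lemma map_ins_at (f : nat -> nat) j x s : j <= length s -> map f (ins_at j x s) = ins_at j (f x) (map f s).
Proof. revert j; induction s as [|y s IH]; intros [|j] H; simpl in *; auto; try lia. rewrite IH; auto; lia. Qed.
Lemma map_rem_at (f : nat -> nat) j s : map f (rem_at j s) = rem_at j (map f s).
Proof. revert j; induction s as [|y s IH]; intros [|j]; simpl; auto. rewrite IH; auto. Qed.
Lemma map_set_at (f : nat -> nat) j x s : map f (set_at j x s) = set_at j (f x) (map f s).
Proof. revert j; induction s as [|y s IH]; intros [|j]; simpl; auto. rewrite IH; auto. Qed.
Lemma nth_map_lt (f : nat -> nat) j s : j < length s -> nth j (map f s) 0 = f (nth j s 0).
Proof. intro H. rewrite nth_indep with (d' := f 0) by (rewrite length_map; auto). apply map_nth. Qed.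
Lemma in_ins_at x j y s : In x (ins_at j y s) -> x = y \/ In x s.
Proof. revert j; induction s as [|z s IH]; intros [|j]; simpl; intuition. apply IH in H0. tauto. Qed.
Lemma in_rem_at x j s : In x (rem_at j s) -> In x s.
Proof. revert j; induction s as [|z s IH]; intros [|j]; simpl; intuition. apply IH in H0. tauto. Qed.
Lemma in_set_at x j y s : In x (set_at j y s) -> x = y \/ In x s.
Proof. revert j; induction s as [|z s IH]; intros [|j]; simpl; intuition. apply IH in H0. tauto. Qed.

Definition fresh_above (sym : list nat) (n : nat) : Prop := forall x, In x sym -> x < n.

Lemma fresh_above_S sym n : fresh_above sym n -> fresh_above sym (S n).
Proof. intros H x Hx. specialize (H x Hx). lia. Qed.
Lemma fresh_above_ins_at sym n j y : fresh_above sym n -> y < n -> fresh_above (ins_at j y sym) n.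
Proof. intros H Hy x Hx. apply in_ins_at in Hx as [-> | Hx]; auto. Qed.
Lemma fresh_above_rem_at sym n j : fresh_above sym n -> fresh_above (rem_at j sym) n.
Proof. intros H x Hx. apply H. eapply in_rem_at; eauto. Qed.
Lemma fresh_above_set_at sym n j y : fresh_above sym n -> y < n -> fresh_above (set_at j y sym) n.
Proof. intros H Hy x Hx. apply in_set_at in Hx as [-> | Hx]; auto. Qed.
Lemma fresh_above_nth sym n j : fresh_above sym n -> j < length sym -> nth j sym 0 < n.
Proof. intros H Hj. apply H, nth_In, Hj. Qed.

Lemma map_update_fresh sym n mu z : fresh_above sym n -> map (update mu n z) sym = map mu sym.
Proof.
  intro Hs. apply map_ext_in. intros x Hx. unfold update.
  destruct (Nat.eqb_spec x n); [specialize (Hs x Hx); lia | reflexivity].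
Qed.

Lemma vsum_gauss_term_cons_T n N mu C t T :
  vsum n N mu (gauss_term C (t :: T)) = vsum n N mu (fun r => Kmul (zpow (square_term t r)) (gauss_term C T r)).
Proof.
  revert n mu; induction N as [|N IH]; intros n mu; simpl.
  - unfold gauss_term, quad_form. simpl. rewrite <- zpow_add. ring.
  - apply sum5_ext. intros. apply IH.
Qed.

Lemma vsum_gauss_term_cons_C n N mu C a b T :
  vsum n N mu (gauss_term ((a, b) :: C) T) =
  vsum n N mu (fun r => Kmul (if Nat.eqb (r a) (r b) then K1 else K0) (gauss_term C T r)).
Proof.
  revert n mu; induction N as [|N IH]; intros n mu; simpl.
  - unfold gauss_term, constraint. simpl. destruct (Nat.eqb _ _), (satisfies C mu); simpl; ring.
  - apply sum5_ext. intros. apply IH.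
Qed.

Definition compile_spec (d : diagram) : Prop :=
  forall sym n mu N C T, tangle (2 * length sym) d 0 -> fresh_above sym n -> (forall i, mu i < 5) ->
  compile d sym n = (N, C, T) ->
  eval_diag Kvals d (fun _ => K1) (map mu sym) = vsum n N mu (gauss_term C T).

Section CompileSteps.
Variables (d : diagram) (j : nat) (sym : list nat) (n : nat) (mu : nat -> nat) (N : nat)
  (C : list (nat * nat)) (T : list (Z * nat * nat)).
Hypotheses (IH : compile_spec d) (Hs : fresh_above sym n) (Hmu : forall i, mu i < 5).

Lemma compile_cup_even : j <= length sym -> tangle (2 * S (length sym)) d 0 ->
  compile d (ins_at j n sym) (S n) = (N, C, T) ->
  sum5 Kvals (fun z => eval_diag Kvals d (fun _ => K1) (ins_at j z (map mu sym))) = vsum n (S N) mu (gauss_term C T).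
Proof.
  intros Hj T2 Ec. cbn [vsum]. apply sum5_ext. intros z Hz.
  rewrite <- (IH (ins_at j n sym) (S n) (update mu n z) N C T); auto.
  - rewrite map_ins_at, map_update_fresh by auto. unfold update. rewrite Nat.eqb_refl. reflexivity.
  - rewrite length_ins_at; auto.
  - apply fresh_above_ins_at; [apply fresh_above_S|]; auto.
  - apply update_lt; auto.
Qed.

Lemma compile_cap_odd : S j < length sym -> tangle (2 * pred (length sym)) d 0 ->
  compile d (rem_at (S j) sym) n = (N, C, T) ->
  (if Nat.eqb (nth j (map mu sym) 0) (nth (S j) (map mu sym) 0)
   then eval_diag Kvals d (fun _ => K1) (rem_at (S j) (map mu sym)) else K0) =
  vsum n N mu (gauss_term ((nth j sym 0, nth (S j) sym 0) :: C) T).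
Proof.
  intros Hj T2 Ec.
  rewrite vsum_gauss_term_cons_C, vsum_factor; auto.
  - rewrite !nth_map_lt by lia. cbn [Vt Kvals]. destruct (Nat.eqb _ _); [|ring].
    assert (T2' : tangle (2 * length (rem_at (S j) sym)) d 0) by (rewrite length_rem_at; auto).
    rewrite <- map_rem_at, (IH (rem_at (S j) sym) n mu N C T T2' (fresh_above_rem_at _ _ _ Hs) Hmu Ec).
    ring.
  - intros r [R1 _]. rewrite !R1; auto; left; apply fresh_above_nth; auto; lia.
Qed.

Lemma compile_cross_odd e : S j < length sym -> tangle (2 * length sym) d 0 ->
  compile d sym n = (N, C, T) ->
  Kmul (cross_weight e true (nth j (map mu sym) 0) (nth (S j) (map mu sym) 0))
       (eval_diag Kvals d (fun _ => K1) (map mu sym)) =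
  vsum n N mu (gauss_term C ((cross_sign e true, nth j sym 0, nth (S j) sym 0) :: T)).
Proof.
  intros Hj T2 Ec.
  rewrite vsum_gauss_term_cons_T, vsum_factor, <- (IH _ _ _ _ _ _ T2 Hs Hmu Ec); auto.
  - rewrite !nth_map_lt by lia. reflexivity.
  - intros r [R1 _]. unfold square_term. rewrite !R1; auto; left; apply fresh_above_nth; auto; lia.
Qed.

Lemma compile_cross_even e : j < length sym -> tangle (2 * length sym) d 0 ->
  compile d (set_at j n sym) (S n) = (N, C, T) ->
  sum5 Kvals (fun z => Kmul (cross_weight e false (nth j (map mu sym) 0) z)
                            (eval_diag Kvals d (fun _ => K1) (set_at j z (map mu sym)))) =
  vsum n (S N) mu (gauss_term C ((cross_sign e false, nth j sym 0, n) :: T)).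
Proof.
  intros Hj T2 Ec. cbn [vsum]. apply sum5_ext. intros z Hz.
  assert (Ha : nth j sym 0 < n) by (apply fresh_above_nth; auto).
  rewrite vsum_gauss_term_cons_T, vsum_factor; [| apply update_lt; auto |].
  - rewrite <- (IH (set_at j n sym) (S n) (update mu n z) N C T); auto.
    + rewrite map_set_at, map_update_fresh, nth_map_lt by auto. unfold square_term, update.
      rewrite Nat.eqb_refl. destruct (Nat.eqb_spec (nth j sym 0) n); [lia | reflexivity].
    + rewrite length_set_at; auto.
    + apply fresh_above_set_at; [apply fresh_above_S|]; auto.
    + apply update_lt; auto.
  - intros r [R1 _]. unfold square_term. rewrite !R1; auto; left; lia.
Qed.

End CompileSteps.

Lemma compile_correct d : compile_spec d.
Proof.
  induction d as [|[k e] d IH]; intros sym n mu N C T Tg Hs Hmu Ec.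
  - injection Ec as <- <- <-. reflexivity.
  - destruct Tg as [T1 T2]. cbn [pos el] in T1, T2.
    destruct (slice_fits_tangle 0 k e (length sym) ltac:(lia)) as [A B].
    rewrite Nat.sub_0_r in A, B. rewrite Nat.add_0_l in B. rewrite B in T2.
    change (eval_diag Kvals (Sl k e :: d) (fun _ => K1) (map mu sym)) with
      (step_at Kvals (Nat.div2 k) (Nat.odd k) e (eval_diag Kvals d (fun _ => K1)) (map mu sym)).
    cbn [compile pos el] in Ec. set (j := Nat.div2 k) in *.
    unfold slice_fits, width_after in *.
    destruct e, (Nat.odd k); rewrite ?Nat.leb_le, ?Nat.ltb_lt in A; unfold step_at;
      try (destruct (compile d _ _) as [[N' C'] T'] eqn:E'; injection Ec as <- <- <-).
    + rewrite nth_map_lt, <- map_ins_at by lia.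
      apply (IH _ _ _ _ _ _); [rewrite length_ins_at by lia; exact T2 | | exact Hmu | exact E'].
      apply fresh_above_ins_at; auto. apply fresh_above_nth; auto.
    + exact (compile_cup_even d j sym n mu N' C' T' IH Hs Hmu A T2 E').
    + exact (compile_cap_odd d j sym n mu N' C' T' IH Hs Hmu A T2 E').
    + rewrite <- map_rem_at.
      apply (IH _ _ _ _ _ _); [rewrite length_rem_at by lia; exact T2 | | exact Hmu | exact E'].
      apply fresh_above_rem_at; auto.
    + exact (compile_cross_odd d j sym n mu N' C' T' IH Hs Hmu Xp A T2 E').
    + exact (compile_cross_even d j sym n mu N' C' T' IH Hs Hmu Xp A T2 E').
    + exact (compile_cross_odd d j sym n mu N' C' T' IH Hs Hmu Xn A T2 E').
    + exact (compile_cross_even d j sym n mu N' C' T' IH Hs Hmu Xn A T2 E').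
Qed.

(** * The Gauss sum has positive norm *)

Lemma satisfies_zero_val C : satisfies C zero_val = true.
Proof. apply forallb_forall. intros. apply Nat.eqb_refl. Qed.

Lemma Kconj_constraint C r : Kconj (constraint C r) = constraint C r.
Proof. unfold constraint. destruct (satisfies C r); reflexivity. Qed.

Lemma mod5_add_cancel a b c : a < 5 -> b < 5 -> (a + c) mod 5 = (b + c) mod 5 -> a = b.
Proof.
  intros Ha Hb E. rewrite (Nat.Div0.add_mod a), (Nat.Div0.add_mod b), (Nat.mod_small a), (Nat.mod_small b) in E
    by lia.
  pose proof (Nat.mod_upper_bound c 5 ltac:(lia)).
  assert (c mod 5 = 0 \/ c mod 5 = 1 \/ c mod 5 = 2 \/ c mod 5 = 3 \/ c mod 5 = 4) as HH by lia.
  assert (a = 0 \/ a = 1 \/ a = 2 \/ a = 3 \/ a = 4) as Ha' by lia.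
  assert (b = 0 \/ b = 1 \/ b = 2 \/ b = 3 \/ b = 4) as Hb' by lia.
  destruct HH as [Hc|[Hc|[Hc|[Hc|Hc]]]]; rewrite Hc in E; destruct Ha' as [->|[->|[->|[->| ->]]]];
  destruct Hb' as [->|[->|[->|[->| ->]]]]; simpl in E; lia.
Qed.

(* The solutions of the cap constraints form a subgroup of (Z/5)^N. *)
Lemma satisfies_val_add C h r : (forall i, h i < 5) -> (forall i, r i < 5) ->
  satisfies C r = true -> satisfies C (val_add h r) = satisfies C h.
Proof.
  intros Hh Hr. induction C as [|[a b] C IH]; [reflexivity|]. cbn [satisfies forallb fst snd].
  intro Hab. apply andb_true_iff in Hab as [Hab HC]. apply Nat.eqb_eq in Hab.
  fold (satisfies C r) in HC. fold (satisfies C h) (satisfies C (val_add h r)). rewrite IH by exact HC.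
  f_equal. unfold val_add. rewrite Hab.
  destruct (Nat.eqb_spec (h a) (h b)) as [->|Hne]; [apply Nat.eqb_refl|].
  apply Nat.eqb_neq. intro E. apply Hne. eapply mod5_add_cancel; eauto.
Qed.

Lemma constraint_val_add C h r : (forall i, h i < 5) -> (forall i, r i < 5) ->
  satisfies C r = true -> constraint C (val_add h r) = constraint C h.
Proof. intros Hh Hr S. unfold constraint. rewrite satisfies_val_add; auto. Qed.

Definition bilin_term (t : Z * nat * nat) (h r : nat -> nat) : Z :=
  let '(e, a, b) := t in (e * (Z.of_nat (h a) - Z.of_nat (h b)) * (Z.of_nat (r a) - Z.of_nat (r b)))%Z.
Definition bilin_form (T : list (Z * nat * nat)) (h r : nat -> nat) : Z :=
  fold_right (fun t acc => (bilin_term t h r + acc)%Z) 0%Z T.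

Lemma quad_form_cons t T r : quad_form (t :: T) r = (square_term t r + quad_form T r)%Z.
Proof. reflexivity. Qed.
Lemma bilin_form_cons t T h r : bilin_form (t :: T) h r = (bilin_term t h r + bilin_form T h r)%Z.
Proof. reflexivity. Qed.

Lemma Z_of_nat_val_add r h i :
  Z.of_nat (val_add r h i) = (Z.of_nat (r i) + Z.of_nat (h i) - 5 * Z.of_nat ((r i + h i) / 5))%Z.
Proof. unfold val_add. pose proof (Nat.div_mod_eq (r i + h i) 5). lia. Qed.

Lemma quad_form_val_add T h r : exists k,
  quad_form T (val_add h r) = (quad_form T h + 2 * bilin_form T h r + quad_form T r + 5 * k)%Z.
Proof.
  induction T as [|[[e a] b] T [k IH]]; [exists 0%Z; reflexivity|].
  rewrite !quad_form_cons, bilin_form_cons, IH. unfold square_term, bilin_term. rewrite !Z_of_nat_val_add.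
  set (qa := Z.of_nat ((h a + r a) / 5)). set (qb := Z.of_nat ((h b + r b) / 5)).
  set (ha := Z.of_nat (h a)). set (hb := Z.of_nat (h b)).
  set (ra := Z.of_nat (r a)). set (rb := Z.of_nat (r b)).
  exists (k + e * (qa - qb) * (5 * (qa - qb) - 2 * ((ha - hb) + (ra - rb))))%Z. ring.
Qed.

Lemma bilin_form_val_add T h r1 r2 : exists k,
  bilin_form T h (val_add r1 r2) = (bilin_form T h r1 + bilin_form T h r2 + 5 * k)%Z.
Proof.
  induction T as [|[[e a] b] T [k IH]]; [exists 0%Z; reflexivity|].
  rewrite !bilin_form_cons, IH. unfold bilin_term. rewrite !Z_of_nat_val_add.
  set (qa := Z.of_nat ((r1 a + r2 a) / 5)). set (qb := Z.of_nat ((r1 b + r2 b) / 5)).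
  exists (k - e * (Z.of_nat (h a) - Z.of_nat (h b)) * (qa - qb))%Z. ring.
Qed.

Lemma bilin_form_diag T h : bilin_form T h h = quad_form T h.
Proof. induction T as [|[[e a] b] T IH]; [reflexivity|]. rewrite bilin_form_cons, quad_form_cons, IH. reflexivity. Qed.

Lemma bilin_form_zero_val T r : bilin_form T zero_val r = 0%Z.
Proof.
  induction T as [|[[e a] b] T IH]; [reflexivity|].
  rewrite bilin_form_cons, IH. unfold bilin_term, zero_val. ring.
Qed.

Lemma gauss_term_shift_conj C T h r : (forall i, h i < 5) -> (forall i, r i < 5) ->
  Kmul (gauss_term C T (val_add h r)) (Kconj (gauss_term C T r)) =
  Kmul (Kmul (constraint C h) (zpow (quad_form T h))) (Kmul (constraint C r) (zpow (2 * bilin_form T h r))).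
Proof.
  intros Hh Hr. unfold gauss_term. rewrite Kconj_mul, Kconj_constraint, Kconj_zpow.
  destruct (satisfies C r) eqn:Sr; [|unfold constraint; rewrite Sr; ring].
  rewrite constraint_val_add by auto. destruct (quad_form_val_add T h r) as [k ->].
  transitivity (Kmul (constraint C h) (Kmul (constraint C r)
    (Kmul (zpow (quad_form T h + 2 * bilin_form T h r + quad_form T r + 5 * k)) (zpow (- quad_form T r))))); [ring|].
  rewrite zpow_add.
  replace (quad_form T h + 2 * bilin_form T h r + quad_form T r + 5 * k + - quad_form T r)%Z
    with ((quad_form T h + 2 * bilin_form T h r) + 5 * k)%Z by ring.
  rewrite zpow_add_mul5, <- zpow_add. ring.
Qed.

Definition inner_sum (C : list (nat * nat)) (T : list (Z * nat * nat)) (N : nat) (h : nat -> nat) : K :=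
  vsum 0 N zero_val (fun r => Kmul (constraint C r) (zpow (2 * bilin_form T h r))).

(* The inner sum is a character sum: invariant under translation by a solution r1, it is
   multiplied by zeta^(2 B(h, r1)). *)
Lemma inner_sum_vanishes C T N h r1 : in_range 0 N zero_val r1 -> satisfies C r1 = true ->
  ((2 * bilin_form T h r1) mod 5 <> 0)%Z -> inner_sum C T N h = K0.
Proof.
  intros R1 S1 Hc. unfold inner_sum. apply (zpow_fixed_zero _ (2 * bilin_form T h r1)); auto.
  rewrite <- vsum_scale, <- (vsum_translate_zero N r1) by exact R1.
  apply vsum_ext; [intro; unfold zero_val; lia|].
  intros r [_ Hr]. destruct R1 as [_ Hr1].
  rewrite constraint_val_add by auto. destruct (bilin_form_val_add T h r r1) as [k ->].
  replace (2 * (bilin_form T h r + bilin_form T h r1 + 5 * k))%Z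
    with ((2 * bilin_form T h r + 2 * bilin_form T h r1) + 5 * (2 * k))%Z by ring.
  rewrite zpow_add_mul5, <- zpow_add. ring.
Qed.

Lemma inner_sum_count C T N h :
  (forall r, in_range 0 N zero_val r -> satisfies C r = true -> ((2 * bilin_form T h r) mod 5 = 0)%Z) ->
  exists m, 1 <= m /\ inner_sum C T N h = Knat m.
Proof.
  intro Hall. unfold inner_sum.
  rewrite (vsum_ext 0 N zero_val _ (constraint C)); [| intro; unfold zero_val; lia |].
  - destruct (vsum_nat_ge 0 N zero_val (constraint C) zero_val 1) as [m [A B]].
    + intro; unfold zero_val; lia.
    + intros r _. unfold constraint. destruct (satisfies C r); [exists 1 | exists 0]; reflexivity.
    + apply in_range_zero_val.
    + unfold constraint. rewrite satisfies_zero_val. reflexivity.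
    + exists m. auto.
  - intros r R. unfold constraint. destruct (satisfies C r) eqn:Sr; [|ring].
    rewrite zpow_mod, (Hall r R Sr). reflexivity.
Qed.

Lemma mod5_double_zero (x : Z) : ((2 * x) mod 5 = 0 -> x mod 5 = 0)%Z.
Proof. intro H. Z.div_mod_to_equations. lia. Qed.

Lemma outer_summand_nat C T N h : in_range 0 N zero_val h ->
  exists m, Kmul (Kmul (constraint C h) (zpow (quad_form T h))) (inner_sum C T N h) = Knat m /\
            (h = zero_val -> 1 <= m).
Proof.
  intro Rh.
  destruct (classic (exists r1, in_range 0 N zero_val r1 /\ satisfies C r1 = true /\
                                ((2 * bilin_form T h r1) mod 5 <> 0)%Z)) as [[r1 [R1 [S1 Hc]]] | Hn].
  - exists 0. split.
    + rewrite (inner_sum_vanishes C T N h r1); auto. change (Knat 0) with K0. ring.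
    + intros ->. rewrite bilin_form_zero_val in Hc. contradiction.
  - assert (Hall : forall r1, in_range 0 N zero_val r1 -> satisfies C r1 = true ->
                   ((2 * bilin_form T h r1) mod 5 = 0)%Z).
    { intros r1 R1 S1. destruct (Z.eq_dec ((2 * bilin_form T h r1) mod 5) 0); auto. exfalso. eauto. }
    destruct (inner_sum_count C T N h Hall) as [m [Hm ->]].
    unfold constraint. destruct (satisfies C h) eqn:Sh.
    + exists m. split; auto.
      assert (Hq : (quad_form T h mod 5 = 0)%Z)
        by (rewrite <- bilin_form_diag; apply mod5_double_zero, Hall; auto).
      rewrite zpow_mod, Hq. change (zpow 0) with K1. ring.
    + exists 0. split; [change (Knat 0) with K0; ring|]. intros ->.
      rewrite satisfies_zero_val in Sh. discriminate.
Qed.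

Theorem gauss_sum_norm_pos C T N : exists m, 1 <= m /\
  Kmul (vsum 0 N zero_val (gauss_term C T)) (Kconj (vsum 0 N zero_val (gauss_term C T))) = Knat m.
Proof.
  set (S := vsum 0 N zero_val (gauss_term C T)).
  assert (Hr0 : forall i, zero_val i < 5) by (intro; unfold zero_val; lia).
  set (summand h := Kmul (Kmul (constraint C h) (zpow (quad_form T h))) (inner_sum C T N h)).
  assert (E1 : Kmul S (Kconj S) = vsum 0 N zero_val summand).
  { unfold S at 2. rewrite Kconj_vsum, <- vsum_scale.
    transitivity (vsum 0 N zero_val (fun r => vsum 0 N zero_val (fun h =>
      Kmul (gauss_term C T (val_add h r)) (Kconj (gauss_term C T r))))).
    { apply vsum_ext; auto. intros r R. unfold S.
      rewrite <- (vsum_translate_zero N r (gauss_term C T)) by exact R. rewrite <- vsum_scale_r. reflexivity. }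
    rewrite vsum_comm. apply vsum_ext; auto. intros h Rh. unfold summand, inner_sum. rewrite <- vsum_scale.
    apply vsum_ext; auto. intros r Rr. apply gauss_term_shift_conj; [apply Rh | apply Rr]. }
  rewrite E1.
  destruct (outer_summand_nat C T N zero_val (in_range_zero_val N)) as [m0 [E0 H0]].
  destruct (vsum_nat_ge 0 N zero_val summand zero_val m0) as [m [A B]]; auto.
  - intros h Rh. destruct (outer_summand_nat C T N h Rh) as [m [E _]]. eauto.
  - apply in_range_zero_val.
  - exists m. specialize (H0 eq_refl). split; [lia | exact A].
Qed.

Theorem goeritz_norm_pos L : link L -> exists m, 1 <= m /\ Kmul (goeritz L) (Kconj (goeritz L)) = Knat m.
Proof.
  intro HL. destruct (compile L [] 0) as [[N C] T] eqn:Ec.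
  unfold goeritz. change (@nil nat) with (map zero_val []).
  rewrite (compile_correct L [] 0 zero_val N C T); auto.
  - apply gauss_sum_norm_pos.
  - intros x [].
  - intro; unfold zero_val; lia.
Qed.

(* Powers of sqrt 5 are a + b sqrt 5 with a, b >= 0, and sqrt 5 = (-1, 0, -2, -2). *)
Lemma sqrt5_power_shape c : sqrt5_power c -> exists a b : Z, (0 <= a /\ 0 <= b /\ 0 < a + b)%Z /\
  c = mkK (a - b) 0 (-2 * b) (-2 * b).
Proof.
  intros [n ->]. induction n as [|n [a [b [H E]]]].
  - exists 1%Z, 0%Z. split; [lia | reflexivity].
  - exists (5 * b)%Z, a. split; [lia|]. cbn [Kpow]. rewrite E.
    replace sqrt5 with (mkK (-1) 0 (-2) (-2)) by (vm_compute; reflexivity).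
    unfold Kmul; cbn [k0 k1 k2 k3]. f_equal; ring.
Qed.

Lemma goeritz_rel_sign_unique L L' : link L -> goeritz_rel true L L' -> ~ goeritz_rel false L L'.
Proof.
  intros HL [c1 [c2 [P1 [P2 E1]]]] [c3 [c4 [P3 [P4 E2]]]]. cbn [sign] in E1, E2.
  assert (Z0 : Kmul (Kadd (Kmul c4 c1) (Kmul c2 c3)) (goeritz L) = K0).
  { transitivity (Kadd (Kmul c4 (Kmul c1 (goeritz L))) (Kmul c2 (Kmul c3 (goeritz L)))); [ring|].
    rewrite E1, E2. ring. }
  destruct (goeritz_norm_pos L HL) as [m [Hm Em]].
  assert (Z1 : Kmul (Kadd (Kmul c4 c1) (Kmul c2 c3)) (Knat m) = K0).
  { rewrite <- Em.
    transitivity (Kmul (Kmul (Kadd (Kmul c4 c1) (Kmul c2 c3)) (goeritz L)) (Kconj (goeritz L))); [ring|].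
    rewrite Z0. ring. }
  destruct (sqrt5_power_shape _ (sqrt5_power_mul _ _ P4 P1)) as [a1 [b1 [H1 F1]]].
  destruct (sqrt5_power_shape _ (sqrt5_power_mul _ _ P2 P3)) as [a2 [b2 [H2 F2]]].
  rewrite F1, F2 in Z1. unfold Knat, Kmul, Kadd in Z1.
  pose proof (f_equal k0 Z1) as G0. pose proof (f_equal k2 Z1) as G2.
  cbn [k0 k1 k2 k3 K0] in G0, G2. nia.
Qed.

(** * The BLMH polynomial at 2 cos(2 pi / 5) *)

Open Scope R_scope.

(* x = 2 cos(2 pi/5) is a root of x^2 + x - 1, from cos(3t) = cos(2t) at t = 2 pi/5. *)
Lemma two_cos_2pi5_root : let x := 2 * cos (2 * PI / 5) in x * x + x - 1 = 0.
Proof.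
  intro x. set (c := cos (2 * PI / 5)). set (s := sin (2 * PI / 5)).
  assert (H1 : cos (2 * (2 * PI / 5)) = 2 * c * c - 1) by (rewrite cos_2a_cos; unfold c; ring).
  assert (H2 : sin (2 * (2 * PI / 5)) = 2 * s * c) by (rewrite sin_2a; unfold s, c; ring).
  assert (H3 : s * s = 1 - c * c) by (pose proof (sin2_cos2 (2 * PI / 5)) as E; unfold Rsqr in E; unfold s, c; lra).
  assert (H4 : cos (2 * PI / 5 + 2 * (2 * PI / 5)) = c * (2 * c * c - 1) - s * (2 * s * c))
    by (rewrite cos_plus, H1, H2; unfold c, s; ring).
  assert (H5 : cos (2 * PI / 5 + 2 * (2 * PI / 5)) = cos (2 * (2 * PI / 5))).
  { replace (2 * PI / 5 + 2 * (2 * PI / 5)) with (2 * PI - 2 * (2 * PI / 5)) by field.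
    rewrite cos_minus, cos_2PI, sin_2PI. ring. }
  assert (Hc : c < 1).
  { unfold c. rewrite <- cos_0. apply cos_decreasing_1; pose proof PI_RGT_0; lra. }
  assert (E : (c - 1) * (4 * c * c + 2 * c - 1) = 0).
  { rewrite H4, H1 in H5. replace ((c - 1) * (4 * c * c + 2 * c - 1)) with
      (c * (2 * c * c - 1) - 2 * c * (s * s) - (2 * c * c - 1)) by (rewrite H3; ring). lra. }
  apply Rmult_integral in E. destruct E as [E | E]; [lra|]. unfold x. fold c. lra.
Qed.

Lemma tangle_repeat c k w m : c = Xp \/ c = Xn -> (k + 2 <= w)%nat -> tangle w (repeat (Sl k c) m) w.
Proof.
  intros Hc Hk. induction m as [|m IH]; simpl; auto.
  destruct Hc as [-> | ->]; simpl; split; try lia; replace (w - 2 + 2)%nat with w by lia; exact IH.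
Qed.

Section TwistRecurrence.

Variables (x : R) (Q : diagram -> R).
Hypotheses (HQiso : forall D E, link D -> iso D E -> Q D = Q E) (Hx : x * x + x - 1 = 0).
Variables (c c' : elem).
Hypotheses (Hc : c = Xp \/ c = Xn) (Hc' : c' = Xp \/ c' = Xn)
  (Hcancel : forall k, basic [Sl k c; Sl k c'] []) (Hkink : forall k, basic [Sl k c; Sl k Cap] [Sl k Cap])
  (Hskein : forall p s w k, tangle 0 p w -> (k + 2 <= w)%nat -> tangle w s 0 ->
     Q (p ++ Sl k c :: s) + Q (p ++ Sl k c' :: s) = x * (Q (p ++ s) + Q (p ++ Sl k Cap :: Sl k Cup :: s))).
Variables (p s : diagram) (w k : nat).
Hypotheses (Tp : tangle 0 p w) (Hk : (k + 2 <= w)%nat) (Ts : tangle w s 0).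

Let twists m := Q (p ++ repeat (Sl k c) m ++ s).
Let smoothing := Q (p ++ Sl k Cap :: Sl k Cup :: s).

Lemma tangle_twisted m : tangle 0 (p ++ repeat (Sl k c) m) w.
Proof. apply tangle_app. exists w. split; auto. apply tangle_repeat; auto. Qed.

Lemma Q_iso_step D E : link D -> iso_step D E -> Q D = Q E.
Proof. intros L I. apply HQiso; [exact L | apply rst_step, I]. Qed.

Lemma Q_twists_smoothing m : Q (p ++ repeat (Sl k c) m ++ Sl k Cap :: Sl k Cup :: s) = smoothing.
Proof.
  assert (Tcc : tangle w (Sl k Cap :: Sl k Cup :: s) 0).
  { simpl. split; [lia|]. split; [simpl; lia|]. replace (w - 2 + 0 - 0 + 2)%nat with w by lia. exact Ts. }
  induction m as [|m IH]; [reflexivity|]. rewrite <- IH.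
  apply Q_iso_step.
  - rewrite app_assoc. apply tangle_app. exists w. split; [apply tangle_twisted | exact Tcc].
  - exists (p ++ repeat (Sl k c) m), [Sl k c; Sl k Cap], [Sl k Cap], (Sl k Cup :: s), w, (w - 2)%nat.
    split; [apply tangle_twisted|].
    split; [destruct Hc as [-> | ->]; simpl; repeat split; lia|].
    split; [simpl; split; lia|].
    split; [simpl; split; [lia|]; replace (w - 2 - 0 + 2)%nat with w by lia; exact Ts|].
    split; [apply Hkink|].
    rewrite <- !app_assoc. split; [|reflexivity].
    change (repeat (Sl k c) (S m)) with (Sl k c :: repeat (Sl k c) m).
    rewrite repeat_cons, <- !app_assoc. reflexivity.
Qed.

Lemma repeat_S_r {X} (a : X) n : repeat a (S n) = repeat a n ++ [a].
Proof. exact (repeat_cons n a). Qed.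

Lemma Q_twist_recurrence m : twists (S (S m)) + twists m = x * (twists (S m) + smoothing).
Proof.
  pose proof (Hskein (p ++ repeat (Sl k c) (S m)) s w k (tangle_twisted (S m)) Hk Ts) as E.
  rewrite <- !app_assoc, Q_twists_smoothing in E.
  unfold twists. rewrite (repeat_S_r _ (S m)), <- app_assoc.
  assert (Hcancel' : Q (p ++ repeat (Sl k c) (S m) ++ Sl k c' :: s) = Q (p ++ repeat (Sl k c) m ++ s)).
  { apply Q_iso_step.
    - rewrite app_assoc. apply tangle_app. exists w. split; [apply tangle_twisted|].
      destruct Hc' as [-> | ->]; simpl; (split; [lia|]); replace (w - 2 + 2)%nat with w by lia; exact Ts.
    - exists (p ++ repeat (Sl k c) m), [Sl k c; Sl k c'], [], s, w, w.
      split; [apply tangle_twisted|].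
      split; [destruct Hc as [-> | ->]; destruct Hc' as [-> | ->]; simpl; repeat split; lia|].
      split; [reflexivity|]. split; [exact Ts|]. split; [apply Hcancel|].
      rewrite <- !app_assoc. split; [|reflexivity].
      rewrite repeat_S_r, <- !app_assoc. reflexivity. }
  rewrite <- Hcancel'. exact E.
Qed.

(* Since x^2 + x - 1 = 0, the twist recurrence has period 5. *)
Lemma Q_five_twists : Q (p ++ repeat (Sl k c) 5 ++ s) = Q (p ++ s).
Proof.
  change (twists 5 = twists 0).
  pose proof (Q_twist_recurrence 0) as R0. pose proof (Q_twist_recurrence 1) as R1.
  pose proof (Q_twist_recurrence 2) as R2. pose proof (Q_twist_recurrence 3) as R3.
  assert (H : twists 5 - twists 0 = (x * x + x - 1) *
    (x * x * twists 1 + x * x * smoothing - x * twists 0 - x * twists 1 - twists 1 + twists 0)).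
  { assert (E2 : twists 2 = x * twists 1 - twists 0 + x * smoothing) by lra.
    assert (E3 : twists 3 = x * twists 2 - twists 1 + x * smoothing) by lra.
    assert (E4 : twists 4 = x * twists 3 - twists 2 + x * smoothing) by lra.
    assert (E5 : twists 5 = x * twists 4 - twists 3 + x * smoothing) by lra.
    rewrite E5, E4, E3, E2. ring. }
  rewrite Hx in H. lra.
Qed.

End TwistRecurrence.

Lemma shift_T5 k c : shift k (T5 c) = repeat (Sl k c) 5.
Proof. unfold T5. simpl. rewrite Nat.add_0_r. reflexivity. Qed.

Lemma blmh_five_move_invariant (Q : diagram -> R) : is_Q_at (2 * cos (2 * PI / 5)) Q ->
  forall L L' : diagram, link L -> equiv5 L L' -> Q L = Q L'.
Proof.
  intros HQ L L' HL H. revert HL. pose proof two_cos_2pi5_root as Hx. simpl in Hx.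
  destruct HQ as [Hiso [_ Hskein]].
  induction H as [D E H | D | D E H IH | D E F H1 IH1 H2 IH2]; intro HL.
  - destruct H as [H | [H | H]]; [apply Hiso; auto; apply rst_step, H | |];
      destruct H as [p [s [w [k [Tp [Hk [Ts [-> ->]]]]]]]]; rewrite shift_T5; symmetry.
    + exact (Q_five_twists _ Q Hiso Hx Xp Xn (or_introl eq_refl) (or_intror eq_refl)
        b_r2a b_r1ap Hskein p s w k Tp Hk Ts).
    + refine (Q_five_twists _ Q Hiso Hx Xn Xp (or_intror eq_refl) (or_introl eq_refl)
        b_r2b b_r1an _ p s w k Tp Hk Ts).
      intros p' s' w' k' Tp' Hk' Ts'. rewrite Rplus_comm. exact (Hskein p' s' w' k' Tp' Hk' Ts').
  - reflexivity.
  - symmetry. apply IH. apply (proj2 (proj2 (equiv5_goeritz D E H))), HL.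
  - rewrite IH1 by exact HL. apply IH2. apply (proj2 (equiv5_goeritz D E H1)), HL.
Qed.

Theorem lemma2p6 :
  (forall (n : nat) (L L' : diagram), Nat.Odd n -> chain22 n L L' ->
     ~ equiv5 L L') /\
  (forall Q : diagram -> R, is_Q_at (2 * cos (2 * PI / 5)) Q ->
     forall L L' : diagram, link L -> equiv5 L L' -> Q L = Q L').
Proof.
  split; [|exact blmh_five_move_invariant].
  intros n L L' Hn Hchain Hequiv.
  destruct n as [|n]; [destruct Hn as [m Hm]; lia|].
  apply (goeritz_rel_sign_unique L L' (chain22_link n L L' Hchain)).
  - apply Nat.odd_spec in Hn. rewrite <- Hn. exact (chain22_goeritz _ _ _ Hchain).
  - exact (proj1 (equiv5_goeritz L L' Hequiv)).
Qed.
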